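(* Let $d\in\mathbb{N}^+$, $a<b$, let $f\in C([a,b]^d)$, and let $N=36d(2d+1)$ and $L=11$. Then for every $\varepsilon>0$ there exists $\phi\in\mathscr{H}_d(N,L)$ such that $|\phi(\boldsymbol{x})-f(\boldsymbol{x})|<\varepsilon$ for all $\boldsymbol{x}\in[a,b]^d$.
   Context: Let $\sigma_1:\mathbb{R}\to\mathbb{R}$ be the continuous triangular-wave function of period $2$: $\sigma_1(x)=|x|$ for $x\in[-1,1]$ and $\sigma_1(x+2)=\sigma_1(x)$ for all $x$ (equivalently $\sigma_1(x)=|x-2\lfloor (x+1)/2\rfloor|$). Let $\sigma_2(x)=x/(|x|+1)$ (softsign). The activation function (EUAF) is $\sigma(x)=\sigma_1(x)$ for $x\ge 0$ and $\sigma(x)=\sigma_2(x)$ for $x<0$; it is applied to vectors entrywise. For $N,L\in\mathbb{N}^+$, $\mathscr{H}_d(N,L)$ is the set of all functions $\phi:\mathbb{R}^d\to\mathbb{R}$ of the form $\phi=\mathcal{L}_L\circ\sigma\circ\mathcal{L}_{L-1}\circ\cdots\circ\sigma\circ\mathcal{L}_1\circ\sigma\circ\mathcal{L}_0$, where $\mathcal{L}_0:\mathbb{R}^d\to\mathbb{R}^N$, $\mathcal{L}_i:\mathbb{R}^N\to\mathbb{R}^N$ for $1\le i\le L-1$, and $\mathcal{L}_L:\mathbb{R}^N\to\mathbb{R}$ are arbitrary affine maps (real weight matrices and bias vectors); i.e. functions computed by $\sigma$-activated feed-forward networks with $L$ hidden layers each having exactly $N$ neurons. *)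

From Stdlib Require Import Reals Lra Lia.
Open Scope R_scope.

(* Vectors in R^n are represented as functions nat -> R, of which only the
   coordinates 0..n-1 are meaningful. *)

Fixpoint sumn (n : nat) (f : nat -> R) : R :=
  match n with
  | O => 0
  | S m => sumn m f + f m
  end.

Definition sigma1 (x : R) : R := Rabs (x - 2 * IZR (Int_part ((x + 1) / 2)) ).
(* note: Int_part is floor on R (Stdlib: Int_part r = up r - 1). *)

Definition sigma2 (x : R) : R := x / (Rabs x + 1).

Definition sigma (x : R) : R := if Rle_dec 0 x then sigma1 x else sigma2 x.

Definition affine (m : nat) (W : nat -> nat -> R) (c : nat -> R) (x : nat -> R)
  : nat -> R := fun i => sumn m (fun j => W i j * x j) + c i.

Fixpoint hidden (N : nat) (k : nat) (Ws : nat -> nat -> nat -> R)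
   (cs : nat -> nat -> R) (h : nat -> R) : nat -> R :=
  match k with
  | O => h
  | S k' => fun i => sigma (affine N (Ws k) (cs k) (hidden N k' Ws cs h) i)
  end.

(* Network in H_d(N,L):
   phi = L_L o sigma o L_{L-1} o ... o sigma o L_1 o sigma o L_0, L hidden layers
   of width N, arbitrary real affine maps. *)
Definition network (d N L : nat) (W0 : nat -> nat -> R) (c0 : nat -> R)
  (Ws : nat -> nat -> nat -> R) (cs : nat -> nat -> R)
  (WL : nat -> R) (cL : R) (x : nat -> R) : R :=
  let h1 := fun i => sigma (affine d W0 c0 x i) in
  let hL := hidden N (L - 1) Ws cs h1 in
  sumn N (fun j => WL j * hL j) + cL.

Definition in_H (d N L : nat) (phi : (nat -> R) -> R) : Prop :=
  exists W0 c0 Ws cs WL cL,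
    forall x, phi x = network d N L W0 c0 Ws cs WL cL x.

Definition in_cube (d : nat) (a b : R) (x : nat -> R) : Prop :=
  forall i, (i < d)%nat -> a <= x i <= b.

Definition cont_on_cube (d : nat) (a b : R) (f : (nat -> R) -> R) : Prop :=
  (forall x y, (forall i, (i < d)%nat -> x i = y i) -> f x = f y) /\
  forall x, in_cube d a b x ->
    forall eps, eps > 0 -> exists delta, delta > 0 /\
      forall y, in_cube d a b y ->
        (forall i, (i < d)%nat -> Rabs (y i - x i) < delta) ->
        Rabs (f y - f x) < eps.

(* Rescale [f] to [F] with values in [[0, 1]].  Because [sigma1] is a 2-periodic
   triangle wave, a single neuron [n |-> sigma1 (w / (P - n))] reproduces any
   finite table of values in [[0, 1]]: the forward differences of [1 / (P - n)]
   decay so fast that one [w] makes all terms of Newton's expansion nearly even.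
   Combined with floor-like gadgets this gives quantization blocks that locate
   the input in a cell of a shifted grid and look up a value for that cell.

   The first block uses [d + 1] shifted grids of [[a, b]^d]; by pigeonhole every
   point is well inside a cell of one of them.  It tabulates [exp (C (F - 1))],
   and the gated outputs add up to a scalar [S x] between [exp (C (F x - e - 1))]
   and [(d + 1) exp (C (F x + e - 1))].  As [C] is large, [S] determines [F] up
   to [3 e].  The second block quantizes [S] with two shifted grids and
   tabulates [F] itself; the larger of its two gated outputs is within [4 e] of
   [F], and rescaling gives the approximation of [f]. *)

From Stdlib Require Import Reals Lra Lia ZArith Classical ClassicalEpsilon.
Open Scope R_scope.

(** * The activation function *)

Lemma Rabs_le_inv x a : Rabs x <= a -> - a <= x <= a.
Proof. unfold Rabs; destruct Rcase_abs; lra. Qed.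

Lemma sigma1_2Z_plus (q : Z) y : -1 <= y < 1 -> sigma1 (2 * IZR q + y) = Rabs y.
Proof.
  intros Hy. unfold sigma1.
  rewrite <- (Int_part_spec _ q) by lra.
  f_equal; ring.
Qed.

Lemma sigma1_canonical x :
  exists q : Z, -1 <= x - 2 * IZR q < 1 /\ sigma1 x = Rabs (x - 2 * IZR q).
Proof.
  exists (Int_part ((x + 1) / 2)). split; [|reflexivity].
  destruct (base_Int_part ((x + 1) / 2)). lra.
Qed.

Lemma sigma1_range x : 0 <= sigma1 x <= 1.
Proof.
  destruct (sigma1_canonical x) as [q [Hq ->]].
  unfold Rabs; destruct Rcase_abs; lra.
Qed.

Lemma IZR_neq_dist (z q : Z) : z <> q -> 1 <= Rabs (IZR z - IZR q).
Proof.
  intros Hne. rewrite <- minus_IZR.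
  destruct (Z.lt_total (z - q) 0) as [H|[H|H]]; [|lia|].
  - apply Z.le_succ_l in H. apply IZR_le in H. rewrite succ_IZR in H.
    rewrite Rabs_left; lra.
  - apply Z.le_succ_l in H. apply IZR_le in H. rewrite succ_IZR in H.
    rewrite Rabs_right; lra.
Qed.

Lemma Int_part_ge r (z : Z) : IZR z <= r -> (z <= Int_part r)%Z.
Proof.
  intros H. destruct (base_Int_part r) as [H1 H2].
  destruct (Z.le_gt_cases z (Int_part r)) as [Hz|Hz]; [exact Hz|].
  apply Z.le_succ_l in Hz. apply IZR_le in Hz. rewrite succ_IZR in Hz. lra.
Qed.

Lemma Int_part_le r (z : Z) : r < IZR z + 1 -> (Int_part r <= z)%Z.
Proof.
  intros H. destruct (base_Int_part r) as [H1 H2].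
  apply Z.lt_succ_r. apply lt_IZR. rewrite succ_IZR. lra.
Qed.

Lemma IZR_abs_lt1 (z : Z) : Rabs (IZR z) < 1 -> z = 0%Z.
Proof.
  intros H. apply Rabs_def2 in H. destruct H as [H1 H2].
  change (- (1)) with (IZR (-1)) in H2. change 1 with (IZR 1) in H1.
  apply lt_IZR in H1. apply lt_IZR in H2. lia.
Qed.

(* With [sigma1_canonical]: [sigma1 x] is the distance from [x] to [2Z]. *)
Lemma sigma1_le_dist x (z : Z) : sigma1 x <= Rabs (x - 2 * IZR z).
Proof.
  destruct (sigma1_canonical x) as [q [Hq ->]].
  destruct (Z.eq_dec z q) as [->|Hne]; [lra|].
  pose proof (IZR_neq_dist z q Hne) as Hzq.
  pose proof (Rabs_triang_inv (2 * (IZR z - IZR q)) (x - 2 * IZR q)) as Ht.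
  replace (2 * (IZR z - IZR q) - (x - 2 * IZR q)) with (- (x - 2 * IZR z)) in Ht by ring.
  rewrite Rabs_Ropp, Rabs_mult, (Rabs_right 2) in Ht by lra.
  assert (Rabs (x - 2 * IZR q) <= 1) by (unfold Rabs; destruct Rcase_abs; lra).
  lra.
Qed.

Lemma sigma1_lipschitz x y : Rabs (sigma1 x - sigma1 y) <= Rabs (x - y).
Proof.
  assert (Half : forall x y, sigma1 x - sigma1 y <= Rabs (x - y)).
  { clear x y. intros x y. destruct (sigma1_canonical y) as [q [_ Hy]].
    pose proof (sigma1_le_dist x q).
    pose proof (Rabs_triang (x - y) (y - 2 * IZR q)).
    replace (x - y + (y - 2 * IZR q)) with (x - 2 * IZR q) in * by ring. lra. }
  pose proof (Half x y). pose proof (Half y x) as Hyx. rewrite Rabs_minus_sym in Hyx.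
  unfold Rabs at 1; destruct Rcase_abs; lra.
Qed.

Lemma sigma1_periodic x (z : Z) : sigma1 (x + 2 * IZR z) = sigma1 x.
Proof.
  destruct (sigma1_canonical x) as [q [Hq ->]].
  replace (x + 2 * IZR z) with (2 * IZR (q + z) + (x - 2 * IZR q)) by (rewrite plus_IZR; ring).
  apply sigma1_2Z_plus; lra.
Qed.

Lemma sigma1_reflect r : 0 <= r <= 1 -> sigma1 (1 + r) = 1 - r.
Proof.
  intros Hr. replace (1 + r) with (2 * IZR 1 + (r - 1)) by (simpl; ring).
  rewrite sigma1_2Z_plus by lra. rewrite Rabs_left1 by lra. ring.
Qed.

Lemma sigma1_id y : 0 <= y <= 1 -> sigma1 y = y.
Proof.
  intros Hy. destruct (Req_dec y 1) as [->|Hne].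
  - replace 1 with (1 + 0) at 1 by ring. rewrite sigma1_reflect; lra.
  - replace y with (2 * IZR 0 + y) at 1 by (simpl; ring).
    rewrite sigma1_2Z_plus by lra. apply Rabs_right. lra.
Qed.

Lemma sigma1_even (q : Z) y : 0 <= y <= 1 -> sigma1 (2 * IZR q + y) = y.
Proof. intros Hy. rewrite Rplus_comm, sigma1_periodic. apply sigma1_id; lra. Qed.

Lemma sigma1_odd (q : Z) r : 0 <= r <= 1 -> sigma1 (2 * IZR q + 1 + r) = 1 - r.
Proof.
  intros Hr. replace (2 * IZR q + 1 + r) with ((1 + r) + 2 * IZR q) by ring.
  rewrite sigma1_periodic. apply sigma1_reflect; lra.
Qed.

Lemma sigma1_plus2 y : -1 <= y <= 1 -> sigma1 (y + 2) = Rabs y.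
Proof.
  intros Hy. replace (y + 2) with (y + 2 * IZR 1) by (simpl; ring).
  rewrite sigma1_periodic. destruct (Rle_lt_dec 0 y).
  - rewrite Rabs_right by lra. apply sigma1_id; lra.
  - replace y with (2 * IZR 0 + y) at 1 by (simpl; ring). apply sigma1_2Z_plus; lra.
Qed.

Lemma sigma1_double u :
  exists q : Z, -1/2 <= u - IZR q < 1/2 /\ sigma1 (2 * u) = 2 * Rabs (u - IZR q).
Proof.
  destruct (sigma1_canonical (2 * u)) as [q [Hq E]]. exists q. split; [lra|].
  rewrite E. replace (2 * u - 2 * IZR q) with (2 * (u - IZR q)) by ring.
  rewrite Rabs_mult, (Rabs_right 2) by lra. reflexivity.
Qed.

Lemma sigma1_double_gt u dl : 0 < dl -> 2 * dl < sigma1 (2 * u) ->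
  IZR (Int_part u) + dl <= u <= IZR (Int_part u) + 1 - dl.
Proof.
  intros Hdl H. destruct (sigma1_double u) as [q [Hq E]]. rewrite E in H.
  destruct (Rle_lt_dec (IZR q) u).
  - rewrite Rabs_right in H by lra. rewrite <- (Int_part_spec u q) by lra. lra.
  - rewrite Rabs_left in H by lra. rewrite <- (Int_part_spec u (q - 1)) by (rewrite minus_IZR; simpl; lra).
    rewrite minus_IZR. simpl. lra.
Qed.

Lemma sigma1_double_lt u c : sigma1 (2 * u) < c -> exists q : Z, Rabs (u - IZR q) < c / 2.
Proof. intros H. destruct (sigma1_double u) as [q [_ E]]. exists q. lra. Qed.

Lemma sigma_nonneg x : 0 <= x -> sigma x = sigma1 x.
Proof. intros H. unfold sigma. destruct (Rle_dec 0 x); [reflexivity|lra]. Qed.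

Lemma sigma_neg x : x < 0 -> sigma x = x / (1 - x).
Proof.
  intros H. unfold sigma, sigma2. destruct (Rle_dec 0 x); [lra|].
  rewrite Rabs_left by lra. f_equal; ring.
Qed.

Lemma Rabs_sigma_le x : Rabs (sigma x) <= 1.
Proof.
  destruct (Rle_dec 0 x) as [H|H].
  - rewrite sigma_nonneg by lra. pose proof (sigma1_range x). rewrite Rabs_right; lra.
  - rewrite sigma_neg by lra.
    assert (Hq : -1 < x / (1 - x) < 0).
    { split; [apply Rmult_lt_reg_r with (1 - x)|]; [lra| |].
      - unfold Rdiv. rewrite Rmult_assoc, Rinv_l by lra. lra.
      - apply Rdiv_neg_pos; lra. }
    rewrite Rabs_left; lra.
Qed.

Lemma sigma_id y : 0 <= y <= 1 -> sigma y = y.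
Proof. intros. rewrite sigma_nonneg by lra. apply sigma1_id; lra. Qed.

Lemma Rabs_le_div (z Z : R) : 0 < Z -> Rabs z <= Z -> -1 <= z / Z <= 1.
Proof.
  intros HZ Hz. apply Rabs_le_inv in Hz.
  split; [apply Rmult_le_reg_r with Z|apply Rmult_le_reg_r with Z]; try lra;
    unfold Rdiv; rewrite Rmult_assoc, Rinv_l; lra.
Qed.

Lemma sigma_abs z Z : 0 < Z -> Rabs z <= Z -> Z * sigma (z / Z + 2) = Rabs z.
Proof.
  intros HZ Hz. pose proof (Rabs_le_div z Z HZ Hz).
  rewrite sigma_nonneg, sigma1_plus2 by lra.
  unfold Rdiv. rewrite Rabs_mult, (Rabs_right (/ Z)) by (left; apply Rinv_0_lt_compat; lra).
  field. lra.
Qed.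

Definition clip01 (z : R) : R := (Rabs z - Rabs (z - 1) + 1) / 2.

Lemma clip01_range z : 0 <= clip01 z <= 1.
Proof. unfold clip01, Rabs; repeat destruct Rcase_abs; lra. Qed.
Lemma clip01_id z : 0 <= z <= 1 -> clip01 z = z.
Proof. intros. unfold clip01, Rabs; repeat destruct Rcase_abs; lra. Qed.
Lemma clip01_le0 z : z <= 0 -> clip01 z = 0.
Proof. intros. unfold clip01, Rabs; repeat destruct Rcase_abs; lra. Qed.
Lemma clip01_ge1 z : 1 <= z -> clip01 z = 1.
Proof. intros. unfold clip01, Rabs; repeat destruct Rcase_abs; lra. Qed.
Lemma clip01_pos z : 0 < clip01 z -> 0 < z.
Proof. unfold clip01, Rabs; repeat destruct Rcase_abs; lra. Qed.
Lemma clip01_le_max z : clip01 z <= Rmax 0 z.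
Proof. unfold clip01, Rmax; destruct Rle_dec; unfold Rabs; repeat destruct Rcase_abs; lra. Qed.

Lemma clip01_ge z : z <= 1 -> z <= clip01 z.
Proof. intros. unfold clip01, Rabs; repeat destruct Rcase_abs; lra. Qed.

Lemma sigma_clip01 z Z : 0 < Z -> Rabs z <= Z -> Rabs (z - 1) <= Z ->
  (Z * sigma (z / Z + 2) - Z * sigma ((z - 1) / Z + 2) + 1) / 2 = clip01 z.
Proof. intros. rewrite !sigma_abs by assumption. reflexivity. Qed.

(* The correction term is [0] where [sigma1] has slope [1] around [u] (even [k])
   and [1] where it has slope [-1] (odd [k]). *)
Lemma sigma_frac_part u dl (k : Z) : 0 < dl <= 1/4 -> dl <= u ->
  IZR k + dl <= u <= IZR k + 1 - dl ->
  sigma (sigma u + (sigma (u - dl) - sigma (u + dl) + 2 * dl) / (4 * dl)) = u - IZR k.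
Proof.
  intros Hdl Hu Hk.
  rewrite !(sigma_nonneg u), (sigma_nonneg (u - dl)), (sigma_nonneg (u + dl)) by lra.
  destruct (Z.Even_or_Odd k) as [[q ->]|[q ->]]; rewrite ?plus_IZR, mult_IZR in *; simpl (IZR 2) in *.
  - set (r := u - 2 * IZR q).
    replace u with (2 * IZR q + r) by (unfold r; ring).
    replace (2 * IZR q + r - dl) with (2 * IZR q + (r - dl)) by ring.
    replace (2 * IZR q + r + dl) with (2 * IZR q + (r + dl)) by ring.
    rewrite !sigma1_even by (unfold r; lra).
    replace (r + (r - dl - (r + dl) + 2 * dl) / (4 * dl)) with r by (field; lra).
    rewrite sigma_id by (unfold r; lra). ring.
  - set (r := u - 2 * IZR q - 1).
    replace u with (2 * IZR q + 1 + r) by (unfold r; ring).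
    replace (2 * IZR q + 1 + r - dl) with (2 * IZR q + 1 + (r - dl)) by ring.
    replace (2 * IZR q + 1 + r + dl) with (2 * IZR q + 1 + (r + dl)) by ring.
    rewrite !sigma1_odd by (unfold r; lra).
    replace (1 - r + (1 - (r - dl) - (1 - (r + dl)) + 2 * dl) / (4 * dl)) with (1 + (1 - r))
      by (field; lra).
    rewrite sigma_nonneg, sigma1_reflect by (unfold r; lra). simpl (IZR 1). ring.
Qed.

(* On the negative half-line [sigma x + 1 = 1 / (1 - x)]. *)
Lemma sigma_code w P n : 0 <= w -> 0 <= n -> n + 1 < P ->
  sigma (w * (sigma (n - (P - 1)) + 1)) = sigma1 (w / (P - n)).
Proof.
  intros Hw Hn HP. rewrite (sigma_neg (n - (P - 1))) by lra.
  replace (w * ((n - (P - 1)) / (1 - (n - (P - 1))) + 1)) with (w / (P - n)) by (field; lra).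
  apply sigma_nonneg. apply Rmult_le_pos; [exact Hw|]. left; apply Rinv_0_lt_compat; lra.
Qed.

(* [max y0 y1 = (|y0 - y1| + y0 + y1) / 2], computed after shifting into [[0, 1]]. *)
Lemma sigma_max y0 y1 : -2 <= y0 <= 1 -> -2 <= y1 <= 1 ->
  4 * sigma ((sigma ((y0 - y1) / 4 + 2) + 2 * sigma ((y0 + y1 + 4) / 8)) / 2) - 2 = Rmax y0 y1.
Proof.
  intros H0 H1.
  assert (S0 : sigma ((y0 - y1) / 4 + 2) = Rabs (y0 - y1) / 4).
  { pose proof (sigma_abs (y0 - y1) 4 ltac:(lra) ltac:(apply Rabs_le; lra)). lra. }
  rewrite S0, (sigma_id ((y0 + y1 + 4) / 8)) by lra.
  unfold Rmax. destruct Rle_dec; unfold Rabs; destruct Rcase_abs; rewrite sigma_id; lra.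
Qed.

(** * Finite sums *)

Lemma sumn_ext n f g : (forall j, (j < n)%nat -> f j = g j) -> sumn n f = sumn n g.
Proof.
  revert f g; induction n; intros f g H; simpl; [reflexivity|].
  rewrite (IHn f g) by (intros; apply H; lia). rewrite H by lia. reflexivity.
Qed.

Lemma sumn_plus n f g : sumn n (fun j => f j + g j) = sumn n f + sumn n g.
Proof. induction n; simpl; [ring|]. rewrite IHn. ring. Qed.

Lemma sumn_scal n c f : sumn n (fun j => c * f j) = c * sumn n f.
Proof. induction n; simpl; [ring|]. rewrite IHn. ring. Qed.

Lemma sumn_minus n f g : sumn n (fun j => f j - g j) = sumn n f - sumn n g.
Proof. induction n; simpl; [ring|]. rewrite IHn. ring. Qed.

Lemma sumn_const n c : sumn n (fun _ => c) = INR n * c.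
Proof. induction n; simpl sumn; [simpl; ring|]. rewrite IHn, S_INR. ring. Qed.

Lemma sumn_shift n f : sumn (S n) f = f 0%nat + sumn n (fun j => f (S j)).
Proof. revert f; induction n; intros f; simpl in *; [ring|]. rewrite IHn. simpl. ring. Qed.

Lemma sumn_le n f g : (forall j, (j < n)%nat -> f j <= g j) -> sumn n f <= sumn n g.
Proof.
  revert f g; induction n; intros f g H; simpl; [lra|].
  pose proof (IHn f g (fun j Hj => H j ltac:(lia))). pose proof (H n ltac:(lia)). lra.
Qed.

Lemma sumn_nonneg n f : (forall j, (j < n)%nat -> 0 <= f j) -> 0 <= sumn n f.
Proof.
  intros H. rewrite <- (Rmult_0_r (INR n)), <- sumn_const. apply sumn_le. exact H.
Qed.

Lemma sumn_le_const n f c : (forall j, (j < n)%nat -> f j <= c) -> sumn n f <= INR n * c.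
Proof. intros H. rewrite <- sumn_const. apply sumn_le. exact H. Qed.

Lemma sumn_ge_term n f j : (j < n)%nat -> (forall k, (k < n)%nat -> 0 <= f k) -> f j <= sumn n f.
Proof.
  revert f; induction n; intros f Hj Hf; [lia|]. simpl.
  destruct (Nat.eq_dec j n) as [->|Hne].
  - pose proof (sumn_nonneg n f (fun k Hk => Hf k ltac:(lia))). lra.
  - pose proof (IHn f ltac:(lia) (fun k Hk => Hf k ltac:(lia))). pose proof (Hf n ltac:(lia)). lra.
Qed.

Lemma sumn_le_pred n f j : (j < n)%nat -> (forall k, (k < n)%nat -> f k <= 1) -> f j <= 0 ->
  sumn n f <= INR n - 1.
Proof.
  revert f; induction n; intros f Hj H1 H0; [lia|]. simpl sumn. rewrite S_INR.
  destruct (Nat.eq_dec j n) as [->|Hne].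
  - pose proof (sumn_le_const n f 1 (fun k Hk => H1 k ltac:(lia))). lra.
  - pose proof (IHn f ltac:(lia) (fun k Hk => H1 k ltac:(lia)) H0). pose proof (H1 n ltac:(lia)). lra.
Qed.

Lemma sumn_swap n m F :
  sumn n (fun j => sumn m (fun l => F l j)) = sumn m (fun l => sumn n (fun j => F l j)).
Proof.
  revert m F; induction n; intros m F; simpl.
  - rewrite sumn_const. ring.
  - rewrite IHn, <- sumn_plus. reflexivity.
Qed.

Definition kron (j k : nat) (al : R) : R := if Nat.eqb j k then al else 0.

Lemma sumn_kron n k al (v : nat -> R) : (k < n)%nat -> sumn n (fun j => kron j k al * v j) = al * v k.
Proof.
  revert k; induction n; intros k Hk; [lia|]. simpl. unfold kron at 2.
  destruct (Nat.eq_dec k n) as [->|Hne].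
  - rewrite Nat.eqb_refl, (sumn_ext _ _ (fun _ => 0)), sumn_const; [ring|].
    intros j Hj. unfold kron. destruct (Nat.eqb_spec j n); [lia|ring].
  - rewrite IHn by lia. destruct (Nat.eqb_spec n k); [lia|ring].
Qed.

Lemma sumn_add_mul n f g (v : nat -> R) :
  sumn n (fun j => (f j + g j) * v j) = sumn n (fun j => f j * v j) + sumn n (fun j => g j * v j).
Proof. rewrite <- sumn_plus. apply sumn_ext. intros; ring. Qed.

Lemma sumn_sum_mul n k (F : nat -> nat -> R) (v : nat -> R) :
  sumn n (fun j => sumn k (fun l => F l j) * v j) = sumn k (fun l => sumn n (fun j => F l j * v j)).
Proof.
  rewrite <- sumn_swap. apply sumn_ext. intros j Hj.
  rewrite Rmult_comm, <- sumn_scal. apply sumn_ext. intros; ring.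
Qed.

(** * Forward differences and the lookup neuron *)

Fixpoint binom (n k : nat) : nat :=
  match n, k with
  | _, O => 1%nat
  | O, S _ => 0%nat
  | S n', S k' => (binom n' k' + binom n' (S k'))%nat
  end.

Lemma binom_gt n k : (n < k)%nat -> binom n k = 0%nat.
Proof.
  revert k; induction n; intros k H; destruct k; simpl; try lia; try reflexivity.
  rewrite !IHn by lia. reflexivity.
Qed.

Fixpoint diffn (j : nat) (h : nat -> R) : nat -> R :=
  match j with
  | O => h
  | S j' => fun n => diffn j' h (S n) - diffn j' h n
  end.

Lemma diffn_shift j h n : diffn j (fun k => h (S k)) n = diffn j h (S n).
Proof. revert n; induction j; intros n; simpl; [reflexivity|]. rewrite !IHj. reflexivity. Qed.

Lemma diffn_lin j (f g : nat -> R) w n :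
  diffn j (fun k => w * f k - g k) n = w * diffn j f n - diffn j g n.
Proof. revert n; induction j; intros n; simpl; [reflexivity|]. rewrite !IHj. ring. Qed.

Lemma newton_forward n h : h n = sumn (S n) (fun j => INR (binom n j) * diffn j h 0).
Proof.
  revert h; induction n; intros h.
  - simpl. ring.
  - change (h (S n)) with ((fun k => h (S k)) n). rewrite IHn.
    rewrite (sumn_ext _ _ (fun j => INR (binom n j) * diffn j h 0
                                   + INR (binom n j) * diffn (S j) h 0)).
    2:{ intros j Hj. rewrite diffn_shift. simpl. ring. }
    rewrite sumn_plus, (sumn_shift (S n)), (sumn_shift n (fun j => INR (binom n j) * diffn j h 0)).
    rewrite (sumn_ext _ (fun j => INR (binom (S n) (S j)) * diffn (S j) h 0)
               (fun j => INR (binom n j) * diffn (S j) h 0 + INR (binom n (S j)) * diffn (S j) h 0)).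
    2:{ intros j Hj. cbn [binom]. rewrite plus_INR. ring. }
    rewrite sumn_plus. cbn [sumn].
    rewrite (binom_gt n (S n)) by lia.
    replace (binom n 0) with 1%nat by (destruct n; reflexivity).
    simpl binom. cbn [diffn]. simpl INR. ring.
Qed.

Lemma diffn_pow2 j n : diffn j (fun k => 2 ^ k) n = 2 ^ n.
Proof. revert n; induction j; intros n; simpl; [reflexivity|]. rewrite !IHj. simpl. ring. Qed.

Lemma binom_sum n : sumn (S n) (fun j => INR (binom n j)) = 2 ^ n.
Proof.
  rewrite (newton_forward n (fun k => 2 ^ k)).
  apply sumn_ext. intros j Hj. rewrite diffn_pow2. simpl. ring.
Qed.

(* [j + 1] factors: [y (y - 1) ... (y - j)]. *)
Fixpoint ffact (j : nat) (y : R) : R :=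
  match j with
  | O => y
  | S j' => ffact j' y * (y - INR (S j'))
  end.

Lemma ffact_pos j y : INR j < y -> 0 < ffact j y.
Proof.
  revert y; induction j; intros y H; [simpl in *; lra|].
  change (ffact (S j) y) with (ffact j y * (y - INR (S j))). rewrite S_INR in *.
  apply Rmult_lt_0_compat; [apply IHj|]; lra.
Qed.

Lemma ffact_S_shift j y : ffact (S j) y = y * ffact j (y - 1).
Proof.
  induction j; [simpl; ring|].
  change (ffact (S (S j)) y) with (ffact (S j) y * (y - INR (S (S j)))).
  change (ffact (S j) (y - 1)) with (ffact j (y - 1) * (y - 1 - INR (S j))).
  rewrite IHj, !S_INR. ring.
Qed.

Lemma diffn_inv_shift P j n : INR (n + j) + 1 < P ->
  diffn j (fun k => / (P - INR k)) n = INR (fact j) / ffact j (P - INR n).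
Proof.
  revert n; induction j; intros n H.
  - simpl. unfold Rdiv. ring.
  - cbn [diffn]. rewrite plus_INR, S_INR in H.
    rewrite !IHj by (rewrite plus_INR; try rewrite S_INR; lra).
    set (y := P - INR n).
    pose proof (ffact_pos j y ltac:(unfold y; lra)).
    pose proof (ffact_pos j (y - 1) ltac:(unfold y; lra)).
    assert (E1 : ffact (S j) y = y * ffact j (y - 1)) by apply ffact_S_shift.
    assert (E2 : ffact (S j) y = ffact j y * (y - INR (S j))) by reflexivity.
    rewrite S_INR in E2.
    replace (P - INR (S n)) with (y - 1) by (unfold y; rewrite S_INR; ring).
    change (fact (S j)) with (S j * fact j)%nat. rewrite mult_INR, S_INR.
    assert (ffact (S j) y <> 0) by (rewrite E2; apply Rmult_integral_contrapositive; split; unfold y in *; lra).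
    apply (Rmult_eq_reg_r (ffact (S j) y)); [|assumption].
    unfold Rdiv. rewrite Rmult_minus_distr_r.
    rewrite E1 at 1. rewrite E2. field. unfold y in *; repeat split; lra.
Qed.

Lemma find_even_shift A D e : 0 < D -> exists z : Z, A <= (e + 2 * IZR z) / D <= A + 2 / D.
Proof.
  intros HD. exists (up ((A * D - e) / 2)).
  destruct (archimed ((A * D - e) / 2)) as [H1 H2].
  set (u := IZR (up ((A * D - e) / 2))) in *.
  split; apply Rmult_le_reg_r with D; try lra;
    replace ((e + 2 * u) / D * D) with (e + 2 * u) by (field; lra).
  - lra.
  - replace ((A + 2 / D) * D) with (A * D + 2) by (field; lra). lra.
Qed.

Lemma refine_interval c L D e eta : 0 < D -> 0 < eta -> (eta + 2) / D <= L ->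
  exists c', c <= c' /\ c' + eta / D <= c + L /\
    forall w, c' <= w <= c' + eta / D -> exists z : Z, Rabs (w * D - e - 2 * IZR z) <= eta.
Proof.
  intros HD Heta HL.
  assert (Hh : eta / D = 2 * (eta / (2 * D))) by (field; lra).
  assert (0 < eta / (2 * D)) by (apply Rdiv_lt_0_compat; lra).
  destruct (find_even_shift (c + eta / (2 * D)) D e HD) as [z Hz].
  set (ws := (e + 2 * IZR z) / D) in *.
  exists (ws - eta / (2 * D)). split; [lra|]. split.
  { replace ((eta + 2) / D) with (eta / (2 * D) + 2 / D + eta / (2 * D)) in HL by (field; lra). lra. }
  intros w Hw. exists z.
  replace (w * D - e - 2 * IZR z) with ((w - ws) * D) by (unfold ws; field; lra).
  rewrite Rabs_mult, (Rabs_right D) by lra.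
  apply Rle_trans with (eta / (2 * D) * D).
  - apply Rmult_le_compat_r; [lra|]. apply Rabs_le; lra.
  - replace (eta / (2 * D) * D) with (eta / 2) by (field; lra). lra.
Qed.

(* Nested intervals, refined from the last index down. *)
Lemma simultaneous_even_approx (M : nat) (D e : nat -> R) eta : 0 < eta <= 1 ->
  (forall j, (j <= M)%nat -> 0 < D j) ->
  (forall j, (j < M)%nat -> 4 * D (S j) <= eta * D j) ->
  exists w, 0 <= w /\ forall j, (j < M)%nat -> exists z : Z, Rabs (w * D j - e j - 2 * IZR z) <= eta.
Proof.
  intros Heta HD Hr.
  assert (Inv : forall i, (i <= M)%nat -> exists c, 0 <= c /\
            forall w, c <= w <= c + eta / D (M - i)%nat ->
            forall j, (M - i <= j < M)%nat -> exists z : Z, Rabs (w * D j - e j - 2 * IZR z) <= eta).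
  { induction i; intros Hi.
    - exists 0. split; [lra|]. intros w _ j Hj. lia.
    - destruct (IHi ltac:(lia)) as [c [Hc Hw]].
      set (k := (M - S i)%nat). replace (M - i)%nat with (S k) in Hw by (unfold k; lia).
      assert (Dk : 0 < D k) by (apply HD; lia).
      assert (Dk1 : 0 < D (S k)) by (apply HD; lia).
      assert (HL : (eta + 2) / D k <= eta / D (S k)).
      { assert (4 * D (S k) <= eta * D k) by (apply Hr; unfold k; lia).
        apply Rmult_le_reg_r with (D k * D (S k)); [nra|].
        replace ((eta + 2) / D k * (D k * D (S k))) with ((eta + 2) * D (S k)) by (field; lra).
        replace (eta / D (S k) * (D k * D (S k))) with (eta * D k) by (field; lra). nra. }
      destruct (refine_interval c _ (D k) (e k) eta Dk ltac:(lra) HL) as [c' [Hc1 [Hc2 Hz]]].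
      exists c'. split; [lra|]. intros w Hw' j Hj.
      destruct (Nat.eq_dec j k) as [->|Hne]; [apply Hz; exact Hw'|].
      apply Hw; [lra|unfold k in *; lia]. }
  destruct (Inv M (le_n M)) as [c [Hc Hw]].
  exists c. split; [exact Hc|]. intros j Hj. apply (Hw c); [|lia].
  assert (0 < eta / D (M - M)%nat) by (apply Rdiv_lt_0_compat; [lra|apply HD; lia]). lra.
Qed.

Lemma combine_near_even L (c : nat -> nat) (a : nat -> R) eta :
  (forall j, (j < L)%nat -> exists z : Z, Rabs (a j - 2 * IZR z) <= eta) ->
  exists Z0 : Z, Rabs (sumn L (fun j => INR (c j) * a j) - 2 * IZR Z0)
                 <= eta * sumn L (fun j => INR (c j)).
Proof.
  induction L; intros H.
  - exists 0%Z. simpl. rewrite Rmult_0_r, Rminus_0_r, Rabs_R0. lra.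
  - destruct (IHL (fun j Hj => H j ltac:(lia))) as [Z0 HZ].
    destruct (H L ltac:(lia)) as [z Hz].
    exists (Z0 + Z.of_nat (c L) * z)%Z. simpl.
    rewrite plus_IZR, mult_IZR, <- INR_IZR_INZ.
    replace (sumn L (fun j => INR (c j) * a j) + INR (c L) * a L - 2 * (IZR Z0 + INR (c L) * IZR z))
      with ((sumn L (fun j => INR (c j) * a j) - 2 * IZR Z0) + INR (c L) * (a L - 2 * IZR z)) by ring.
    eapply Rle_trans; [apply Rabs_triang|].
    rewrite Rabs_mult, (Rabs_right (INR (c L))) by (apply Rle_ge, pos_INR).
    pose proof (pos_INR (c L)).
    assert (INR (c L) * Rabs (a L - 2 * IZR z) <= INR (c L) * eta) by (apply Rmult_le_compat_l; lra).
    lra.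
Qed.

Lemma sigma1_near_even v tau e (z : Z) : 0 <= tau <= 1 -> Rabs (v - tau - 2 * IZR z) <= e ->
  Rabs (sigma1 v - tau) <= e.
Proof.
  intros Htau Hv.
  replace v with ((v - 2 * IZR z) + 2 * IZR z) by ring.
  rewrite sigma1_periodic, <- (sigma1_id tau) at 1 by exact Htau.
  eapply Rle_trans; [apply sigma1_lipschitz|].
  replace (v - 2 * IZR z - tau) with (v - tau - 2 * IZR z) by ring. exact Hv.
Qed.

Lemma inv_shift_diff_ratio (M : nat) P et j : 0 < et -> 2 * INR M + 3 + 4 * (INR M + 1) / et <= P ->
  (j < M)%nat -> 4 * (INR (fact (S j)) / ffact (S j) P) <= et * (INR (fact j) / ffact j P).
Proof.
  intros Het HP Hj.
  assert (Hj' : INR (S j) <= INR M) by (apply le_INR; lia).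
  pose proof (pos_INR M). rewrite S_INR in Hj'.
  assert (HP4 : 0 <= 4 * (INR M + 1) / et) by (apply Rlt_le, Rdiv_lt_0_compat; lra).
  assert (Ppos : 0 < ffact j P) by (apply ffact_pos; lra).
  assert (Key : 4 * INR (S j) <= et * (P - INR (S j))).
  { assert (Hle : et * (4 * (INR M + 1) / et) <= et * (P - INR (S j))) by
      (apply Rmult_le_compat_l; rewrite ?S_INR; lra).
    replace (et * (4 * (INR M + 1) / et)) with (4 * (INR M + 1)) in Hle by (field; lra).
    rewrite S_INR in *. lra. }
  pose proof (lt_0_INR _ (lt_O_fact j)).
  assert (0 < P - INR (S j)) by (rewrite S_INR; lra).
  change (ffact (S j) P) with (ffact j P * (P - INR (S j))).
  change (fact (S j)) with (S j * fact j)%nat. rewrite mult_INR.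
  replace (4 * (INR (S j) * INR (fact j) / (ffact j P * (P - INR (S j)))))
    with ((4 * INR (S j)) / (P - INR (S j)) * (INR (fact j) / ffact j P)) by (field; lra).
  apply Rmult_le_compat_r; [apply Rlt_le, Rdiv_lt_0_compat; lra|].
  apply Rmult_le_reg_r with (P - INR (S j)); [lra|].
  replace (4 * INR (S j) / (P - INR (S j)) * (P - INR (S j))) with (4 * INR (S j)) by (field; lra).
  exact Key.
Qed.

Lemma newton_near_even (h tau : nat -> R) w et n : 0 <= tau n <= 1 ->
  (forall j, (j <= n)%nat -> exists z : Z, Rabs (w * diffn j h 0 - diffn j tau 0 - 2 * IZR z) <= et) ->
  Rabs (sigma1 (w * h n) - tau n) <= et * 2 ^ n.
Proof.
  intros Htau Hz.
  destruct (combine_near_even (S n) (binom n) (fun j => w * diffn j h 0 - diffn j tau 0) et)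
    as [Z0 HZ0]; [intros j Hj; apply Hz; lia|].
  rewrite binom_sum in HZ0. apply (sigma1_near_even _ _ _ Z0 Htau).
  replace (w * h n - tau n) with (sumn (S n) (fun j => INR (binom n j) * (w * diffn j h 0 - diffn j tau 0)));
    [exact HZ0|].
  change (w * h n - tau n) with ((fun k => w * h k - tau k) n).
  rewrite newton_forward. apply sumn_ext. intros j Hj. rewrite diffn_lin. reflexivity.
Qed.

(* Expand [w / (P - n) - tau n] by Newton's forward formula: for large [P] the
   differences of [1 / (P - n)] decay fast enough that one [w] makes every term
   nearly even. *)
Lemma lookup (M : nat) (tau : nat -> R) eta :
  (forall n, (n < M)%nat -> 0 <= tau n <= 1) -> 0 < eta ->
  exists P w, INR M + 1 < P /\ 0 <= w /\
    forall n, (n < M)%nat -> Rabs (sigma1 (w / (P - INR n)) - tau n) < eta.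
Proof.
  intros Htau Heta.
  set (e0 := Rmin eta 1 / 2).
  assert (He0 : 0 < e0 < eta /\ e0 <= 1/2) by (unfold e0, Rmin; destruct Rle_dec; lra).
  assert (H2M : 1 <= 2 ^ M) by (apply pow_R1_Rle; lra).
  set (et := e0 / 2 ^ M).
  assert (Het : 0 < et <= 1).
  { unfold et; split; [apply Rdiv_lt_0_compat; lra|].
    apply Rmult_le_reg_r with (2 ^ M); [lra|]. unfold Rdiv; rewrite Rmult_assoc, Rinv_l; lra. }
  set (P := 2 * INR M + 3 + 4 * (INR M + 1) / et).
  assert (HP : INR M + 1 < P).
  { pose proof (pos_INR M). assert (0 <= 4 * (INR M + 1) / et) by (apply Rlt_le, Rdiv_lt_0_compat; lra).
    unfold P. lra. }
  set (h := fun k => / (P - INR k)).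
  assert (HD : forall j, (j <= M)%nat -> diffn j h 0 = INR (fact j) / ffact j P).
  { intros j Hj. unfold h. rewrite diffn_inv_shift; [simpl INR; rewrite Rminus_0_r; reflexivity|].
    apply le_INR in Hj. rewrite Nat.add_0_l. lra. }
  destruct (simultaneous_even_approx M (fun j => diffn j h 0) (fun j => diffn j tau 0) et Het)
    as [w [Hw Hz]].
  { intros j Hj. rewrite HD by exact Hj. apply Rdiv_lt_0_compat; [apply lt_0_INR, lt_O_fact|].
    apply ffact_pos. apply le_INR in Hj. lra. }
  { intros j Hj. rewrite !HD by lia. apply (inv_shift_diff_ratio M); [lra|unfold P; lra|exact Hj]. }
  exists P, w. split; [exact HP|]. split; [exact Hw|]. intros n Hn.
  assert (et * 2 ^ n <= e0).
  { unfold et. replace e0 with (e0 / 2 ^ M * 2 ^ M) at 2 by (field; lra).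
    apply Rmult_le_compat_l; [apply Rlt_le, Rdiv_lt_0_compat; lra|].
    apply Rle_pow; [lra|lia]. }
  pose proof (newton_near_even h tau w et n (Htau n Hn) (fun j Hj => Hz j ltac:(lia))).
  apply Rle_lt_trans with e0; [|lra]. unfold h in *. unfold Rdiv. lra.
Qed.

Lemma lookup_family (M : nat) (tau : nat -> nat -> R) eta :
  (forall g n, (n < M)%nat -> 0 <= tau g n <= 1) -> 0 < eta ->
  exists P w : nat -> R, forall g, INR M + 1 < P g /\ 0 <= w g /\
    forall n, (n < M)%nat -> Rabs (sigma1 (w g / (P g - INR n)) - tau g n) < eta.
Proof.
  intros Htau Heta.
  destruct (choice (fun g (pw : R * R) => INR M + 1 < fst pw /\ 0 <= snd pw /\
    forall n, (n < M)%nat -> Rabs (sigma1 (snd pw / (fst pw - INR n)) - tau g n) < eta)) as [pw Hpw].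
  - intros g. destruct (lookup M (tau g) eta (Htau g) Heta) as [P [w H]]. exists (P, w). exact H.
  - exists (fun g => fst (pw g)), (fun g => snd (pw g)). exact Hpw.
Qed.

(** * Uniform continuity on the cube *)

Lemma pow2_unbounded r : exists n, r < 2 ^ n.
Proof.
  destruct (INR_unbounded r) as [n Hn]. exists n.
  enough (INR n <= 2 ^ n) by lra. clear Hn. induction n; [simpl; lra|].
  rewrite S_INR. simpl pow. pose proof (pow_R1_Rle 2 n ltac:(lra)). lra.
Qed.

Section UniformContinuity.
Variables (d : nat) (a b : R) (f : (nat -> R) -> R) (eps : R).

Definition in_box (lo hi x : nat -> R) := forall i, (i < d)%nat -> lo i <= x i <= hi i.

Definition oscillating (lo hi : nat -> R) := forall delta, delta > 0 -> exists x y,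
  in_cube d a b x /\ in_cube d a b y /\ in_box lo hi x /\
  (forall i, (i < d)%nat -> Rabs (x i - y i) < delta) /\ eps <= Rabs (f x - f y).

Lemma oscillating_ext lo hi lo' hi' :
  (forall i, (i < d)%nat -> lo' i = lo i /\ hi' i = hi i) -> oscillating lo hi -> oscillating lo' hi'.
Proof.
  intros E H delta Hdelta. destruct (H delta Hdelta) as [x [y [Hx [Hy [Hb Hxy]]]]].
  exists x, y. split; [exact Hx|]. split; [exact Hy|]. split; [|exact Hxy].
  intros i Hi. destruct (E i Hi) as [-> ->]. apply Hb. exact Hi.
Qed.

Definition upd (g : nat -> R) (c : nat) (v : R) : nat -> R := fun i => if Nat.eqb i c then v else g i.

Lemma oscillating_split lo hi c v : oscillating lo hi ->
  oscillating lo (upd hi c v) \/ oscillating (upd lo c v) hi.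
Proof.
  intros HB. destruct (classic (oscillating lo (upd hi c v))) as [H|H]; [left; exact H|right].
  apply not_all_ex_not in H. destruct H as [d1 H]. apply imply_to_and in H. destruct H as [Hd1 H].
  intros delta Hdelta.
  destruct (HB (Rmin delta d1)) as [x [y [Hx [Hy [Hbox [Hxy Hf]]]]]].
  { unfold Rmin; destruct Rle_dec; lra. }
  assert (Hsmall : forall r, r = delta \/ r = d1 -> forall i, (i < d)%nat -> Rabs (x i - y i) < r).
  { intros r Hr i Hi. eapply Rlt_le_trans; [apply Hxy; exact Hi|].
    destruct Hr as [->| ->]; [apply Rmin_l|apply Rmin_r]. }
  destruct (Rle_dec (x c) v) as [Hc|Hc].
  - exfalso. apply H. exists x, y. split; [exact Hx|]. split; [exact Hy|].
    split; [|split; [apply Hsmall; right; reflexivity|exact Hf]].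
    intros i Hi. unfold upd. destruct (Nat.eqb_spec i c) as [->|]; [|apply Hbox; exact Hi].
    split; [apply Hbox; exact Hi|exact Hc].
  - exists x, y. split; [exact Hx|]. split; [exact Hy|].
    split; [|split; [apply Hsmall; left; reflexivity|exact Hf]].
    intros i Hi. unfold upd. destruct (Nat.eqb_spec i c) as [->|]; [|apply Hbox; exact Hi].
    split; [lra|apply Hbox; exact Hi].
Qed.

Lemma oscillating_halve lo w : 0 <= w -> oscillating lo (fun i => lo i + w) ->
  exists lo', (forall i, lo i <= lo' i <= lo i + w / 2) /\ oscillating lo' (fun i => lo' i + w / 2).
Proof.
  intros Hw H0.
  assert (Hk : forall k, exists lo', (forall i, lo i <= lo' i <= lo i + w / 2) /\
            (forall i, (k <= i)%nat -> lo' i = lo i) /\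
            oscillating lo' (fun i => lo' i + (if Nat.ltb i k then w / 2 else w))).
  { induction k as [|k IHk].
    - exists lo. split; [intros; lra|]. split; [reflexivity|]. exact H0.
    - destruct IHk as [lo' [Hr [Hfix Hosc]]]. set (v := lo' k + w / 2).
      destruct (oscillating_split _ _ k v Hosc) as [Hl|Hu].
      + exists lo'. split; [exact Hr|]. split; [intros i Hi; apply Hfix; lia|].
        refine (oscillating_ext _ _ _ _ _ Hl). intros i Hi. split; [reflexivity|].
        unfold upd, v. destruct (Nat.eqb_spec i k) as [->|Hne].
        * destruct (Nat.ltb_spec k (S k)); [reflexivity|lia].
        * destruct (Nat.ltb_spec i k), (Nat.ltb_spec i (S k)); try lia; reflexivity.
      + exists (upd lo' k v). split; [|split].
        * intros i. unfold upd, v. destruct (Nat.eqb_spec i k) as [->|]; [|apply Hr].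
          rewrite Hfix by lia. lra.
        * intros i Hi. unfold upd. destruct (Nat.eqb_spec i k); [lia|]. apply Hfix. lia.
        * refine (oscillating_ext _ _ _ _ _ Hu). intros i Hi. split; [reflexivity|].
          unfold upd, v. destruct (Nat.eqb_spec i k) as [->|Hne].
          -- rewrite Nat.ltb_irrefl. destruct (Nat.ltb_spec k (S k)); [lra|lia].
          -- destruct (Nat.ltb_spec i k), (Nat.ltb_spec i (S k)); try lia; reflexivity. }
  destruct (Hk d) as [lo' [Hr [_ Hosc]]]. exists lo'. split; [exact Hr|].
  refine (oscillating_ext _ _ _ _ _ Hosc). intros i Hi. split; [reflexivity|].
  rewrite (proj2 (Nat.ltb_lt i d)) by exact Hi. reflexivity.
Qed.

Definition box_width n := (b - a) / 2 ^ n.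

Definition halve_lo (lo : nat -> R) (w : R) : nat -> R :=
  epsilon (inhabits lo) (fun lo' => (forall i, lo i <= lo' i <= lo i + w / 2) /\
                                   oscillating lo' (fun i => lo' i + w / 2)).

Fixpoint box_lo (n : nat) : nat -> R :=
  match n with O => fun _ => a | S n' => halve_lo (box_lo n') (box_width n') end.

Hypothesis Hab : a < b.
Hypothesis Hosc0 : oscillating (fun _ => a) (fun _ => b).

Lemma box_width_S n : box_width (S n) = box_width n / 2.
Proof. unfold box_width. simpl pow. field. apply pow_nonzero. lra. Qed.

Lemma box_width_pos n : 0 < box_width n.
Proof. apply Rdiv_lt_0_compat; [lra|apply pow_lt; lra]. Qed.

Lemma box_lo_spec n : oscillating (box_lo n) (fun i => box_lo n i + box_width n) /\
  forall i, box_lo n i <= box_lo (S n) i <= box_lo n i + box_width (S n).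
Proof.
  induction n as [|n [IH _]].
  - assert (H : oscillating (box_lo 0) (fun i => box_lo 0 i + box_width 0)).
    { refine (oscillating_ext _ _ _ _ _ Hosc0). intros i _. unfold box_width; simpl. split; [reflexivity|field]. }
    split; [exact H|]. rewrite box_width_S.
    exact (proj1 (epsilon_spec _ _ (oscillating_halve _ _ (Rlt_le _ _ (box_width_pos 0)) H))).
  - assert (H : oscillating (box_lo (S n)) (fun i => box_lo (S n) i + box_width (S n))).
    { rewrite box_width_S. exact (proj2 (epsilon_spec _ _ (oscillating_halve _ _ (Rlt_le _ _ (box_width_pos n)) IH))). }
    split; [exact H|]. rewrite (box_width_S (S n)).
    exact (proj1 (epsilon_spec _ _ (oscillating_halve _ _ (Rlt_le _ _ (box_width_pos (S n))) H))).
Qed.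

Lemma box_lo_mono n m i : (n <= m)%nat -> box_lo n i <= box_lo m i.
Proof. induction 1; [lra|]. pose proof (proj2 (box_lo_spec m) i). lra. Qed.

Lemma box_hi_mono n m i : (n <= m)%nat -> box_lo m i + box_width m <= box_lo n i + box_width n.
Proof.
  induction 1; [lra|]. pose proof (proj2 (box_lo_spec m) i). rewrite box_width_S in *.
  pose proof (box_width_pos m). lra.
Qed.

Lemma box_lo_le_hi n m i : box_lo n i <= box_lo m i + box_width m.
Proof.
  destruct (Nat.le_ge_cases n m) as [H|H].
  - pose proof (box_lo_mono n m i H). pose proof (box_width_pos m). lra.
  - pose proof (box_hi_mono m n i H). pose proof (box_width_pos n). lra.
Qed.

Lemma nested_boxes_point : exists z, forall n i, box_lo n i <= z i <= box_lo n i + box_width n.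
Proof.
  assert (Hz : forall i, { z | is_lub (fun r => exists n, r = box_lo n i) z }).
  { intros i. apply completeness.
    - exists (box_lo 0 i + box_width 0). intros r [n ->]. apply box_lo_le_hi.
    - exists (box_lo 0 i). exists 0%nat. reflexivity. }
  exists (fun i => proj1_sig (Hz i)). intros n i. destruct (Hz i) as [z [Hub Hlub]]. simpl. split.
  - apply Hub. exists n. reflexivity.
  - apply Hlub. intros r [m ->]. apply box_lo_le_hi.
Qed.

End UniformContinuity.

(* Bisection: if [f] oscillated by [eps] at every scale, the oscillation would
   concentrate at a point of the cube, where [f] could not be continuous. *)
Lemma uniform_continuity d a b f : a < b -> cont_on_cube d a b f ->
  forall eps, eps > 0 -> exists delta, delta > 0 /\ forall x y, in_cube d a b x -> in_cube d a b y ->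
    (forall i, (i < d)%nat -> Rabs (x i - y i) < delta) -> Rabs (f x - f y) < eps.
Proof.
  intros Hab [_ Hc] eps Heps. apply NNPP. intros Hno.
  assert (Hosc0 : oscillating d a b f eps (fun _ => a) (fun _ => b)).
  { intros delta Hdelta. apply NNPP. intros Hn. apply Hno. exists delta. split; [exact Hdelta|].
    intros x y Hx Hy Hxy. apply Rnot_le_lt. intros Hle. apply Hn. exists x, y.
    split; [exact Hx|]. split; [exact Hy|]. split; [exact Hx|]. split; [exact Hxy|exact Hle]. }
  destruct (nested_boxes_point d a b f eps Hab Hosc0) as [z Hz].
  assert (Hzc : in_cube d a b z).
  { intros i Hi. pose proof (Hz 0%nat i) as Hz0. unfold box_width in Hz0. simpl in Hz0. lra. }
  destruct (Hc z Hzc (eps / 2) ltac:(lra)) as [delta [Hdelta Hcont]].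
  destruct (pow2_unbounded (2 * (b - a) / delta)) as [n Hn].
  assert (Hw : box_width a b n < delta / 2).
  { unfold box_width. pose proof (pow_lt 2 n ltac:(lra)).
    apply Rmult_lt_reg_r with (2 ^ n); [lra|].
    replace ((b - a) / 2 ^ n * 2 ^ n) with (b - a) by (field; lra).
    apply Rmult_lt_reg_l with (2 / delta); [apply Rdiv_lt_0_compat; lra|].
    replace (2 / delta * (b - a)) with (2 * (b - a) / delta) by (field; lra).
    replace (2 / delta * (delta / 2 * 2 ^ n)) with (2 ^ n) by (field; lra). lra. }
  destruct (proj1 (box_lo_spec d a b f eps Hab Hosc0 n) (delta / 2) ltac:(lra))
    as [x [y [Hx [Hy [Hbox [Hxy Hf]]]]]].
  assert (Hxz : forall i, (i < d)%nat -> Rabs (x i - z i) < delta / 2).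
  { intros i Hi. pose proof (Hz n i). pose proof (Hbox i Hi).
    pose proof (box_width_pos a b Hab n). apply Rabs_def1; lra. }
  assert (H1 : Rabs (f x - f z) < eps / 2).
  { apply Hcont; [exact Hx|]. intros i Hi. specialize (Hxz i Hi). lra. }
  assert (H2 : Rabs (f y - f z) < eps / 2).
  { apply Hcont; [exact Hy|]. intros i Hi. specialize (Hxz i Hi). specialize (Hxy i Hi).
    replace (y i - z i) with ((x i - z i) - (x i - y i)) by ring.
    eapply Rle_lt_trans; [apply Rabs_triang|]. rewrite Rabs_Ropp. lra. }
  pose proof (Rabs_triang (f x - f z) (- (f y - f z))) as Ht. rewrite Rabs_Ropp in Ht.
  replace (f x - f z + - (f y - f z)) with (f x - f y) in Ht by ring. lra.
Qed.

Lemma chain_bound (g : nat -> R) K : (forall s, (s < K)%nat -> Rabs (g (S s) - g s) < 1) ->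
  Rabs (g K - g 0%nat) <= INR K.
Proof.
  induction K; intros H; [rewrite Rminus_diag, Rabs_R0; simpl; lra|].
  pose proof (IHK (fun s Hs => H s ltac:(lia))). pose proof (H K ltac:(lia)).
  pose proof (Rabs_triang (g (S K) - g K) (g K - g 0%nat)) as Ht.
  replace (g (S K) - g K + (g K - g 0%nat)) with (g (S K) - g 0%nat) in Ht by ring.
  rewrite S_INR. lra.
Qed.

Lemma bounded_on_cube d a b f : a < b -> cont_on_cube d a b f ->
  exists Mf, 0 < Mf /\ forall x, in_cube d a b x -> Rabs (f x) <= Mf.
Proof.
  intros Hab Hf. destruct (uniform_continuity d a b f Hab Hf 1 ltac:(lra)) as [d1 [Hd1 Hu]].
  destruct (INR_unbounded ((b - a) / d1)) as [K HK].
  assert (HKpos : 0 < INR K).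
  { pose proof (Rdiv_lt_0_compat (b - a) d1 ltac:(lra) Hd1). lra. }
  set (x0 := fun _ : nat => a).
  exists (Rabs (f x0) + INR K). split; [pose proof (Rabs_pos (f x0)); lra|].
  intros x Hx.
  set (p := fun (s : nat) (i : nat) => a + INR s / INR K * (x i - a)).
  assert (Hp : forall s, (s <= K)%nat -> in_cube d a b (p s)).
  { intros s Hs i Hi. specialize (Hx i Hi). unfold p. apply le_INR in Hs.
    assert (0 <= INR s / INR K <= 1).
    { split; [apply Rmult_le_pos; [apply pos_INR|left; apply Rinv_0_lt_compat; lra]|].
      apply Rmult_le_reg_r with (INR K); [lra|]. unfold Rdiv. rewrite Rmult_assoc, Rinv_l; lra. }
    split; nra. }
  assert (Hstep : forall s, (s < K)%nat -> Rabs (f (p (S s)) - f (p s)) < 1).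
  { intros s Hs. apply Hu; [apply Hp; lia|apply Hp; lia|]. intros i Hi. specialize (Hx i Hi).
    unfold p. rewrite S_INR.
    replace (a + (INR s + 1) / INR K * (x i - a) - (a + INR s / INR K * (x i - a)))
      with ((x i - a) / INR K) by (field; lra).
    rewrite Rabs_right by (apply Rle_ge, Rmult_le_pos; [lra|left; apply Rinv_0_lt_compat; lra]).
    apply Rle_lt_trans with ((b - a) / INR K); [apply Rmult_le_compat_r; [left; apply Rinv_0_lt_compat|]; lra|].
    apply Rmult_lt_reg_r with (INR K / d1); [apply Rdiv_lt_0_compat; lra|].
    replace ((b - a) / INR K * (INR K / d1)) with ((b - a) / d1) by (field; lra).
    replace (d1 * (INR K / d1)) with (INR K) by (field; lra). exact HK. }
  pose proof (chain_bound (fun s => f (p s)) K Hstep) as Hc. cbv beta in Hc.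
  destruct Hf as [Hdep _].
  rewrite (Hdep (p K) x), (Hdep (p 0%nat) x0) in Hc
    by (intros i Hi; unfold p, x0; simpl; field; lra).
  pose proof (Rabs_triang_inv (f x) (f x0)). lra.
Qed.

(** * Pigeonhole and digits *)

Lemma pigeonhole d m (Bad : nat -> nat -> Prop) : (d < m)%nat ->
  (forall l g g', (l < d)%nat -> (g < m)%nat -> (g' < m)%nat -> Bad l g -> Bad l g' -> g = g') ->
  exists g, (g < m)%nat /\ forall l, (l < d)%nat -> ~ Bad l g.
Proof.
  revert m Bad; induction d; intros m Bad Hdm Huniq.
  - exists 0%nat. split; [lia|]. intros; lia.
  - destruct (classic (exists g0, (g0 < m)%nat /\ Bad d g0)) as [[g0 [Hg0 HB0]]|Hno].
    + set (skip := fun j => if Nat.ltb j g0 then j else S j).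
      assert (Hskip : forall j j', skip j = skip j' -> j = j')
        by (intros j j'; unfold skip; destruct (Nat.ltb_spec j g0), (Nat.ltb_spec j' g0); lia).
      assert (Hskip0 : forall j, skip j <> g0)
        by (intros j; unfold skip; destruct (Nat.ltb_spec j g0); lia).
      assert (Hskipm : forall j, (j < m - 1)%nat -> (skip j < m)%nat)
        by (intros j Hj; unfold skip; destruct (Nat.ltb_spec j g0); lia).
      destruct (IHd (m - 1)%nat (fun l j => Bad l (skip j))) as [j [Hj Hav]]; [lia| |].
      * intros l g g' Hl Hg Hg' H1 H2. apply Hskip. apply (Huniq l); auto.
      * exists (skip j). split; [apply Hskipm; exact Hj|].
        intros l Hl HB. destruct (Nat.eq_dec l d) as [->|Hne].
        -- apply (Hskip0 j). apply (Huniq d); auto.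
        -- apply (Hav l); [lia|exact HB].
    + destruct (IHd m Bad ltac:(lia)) as [g [Hg Hav]].
      * intros l g g0 Hl Hg Hg0 H1 H2. apply (Huniq l g g0); auto; lia.
      * exists g. split; [exact Hg|]. intros l Hl HB. destruct (Nat.eq_dec l d) as [->|Hne].
        -- apply Hno. exists g. auto.
        -- apply (Hav l); [lia|exact HB].
Qed.

Fixpoint nsum (n : nat) (f : nat -> nat) : nat :=
  match n with O => O | S n' => (nsum n' f + f n')%nat end.

Lemma INR_nsum n f : INR (nsum n f) = sumn n (fun l => INR (f l)).
Proof. induction n; simpl; [reflexivity|]. rewrite plus_INR, IHn. reflexivity. Qed.

Lemma digits_lt n (B : nat) (c : nat -> nat) : (0 < B)%nat ->
  (forall l, (l < n)%nat -> (c l < B)%nat) -> (nsum n (fun l => (B ^ l * c l)%nat) < B ^ n)%nat.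
Proof.
  induction n; intros HB Hc; simpl; [lia|].
  specialize (IHn HB (fun l Hl => Hc l ltac:(lia))). specialize (Hc n ltac:(lia)).
  assert (B ^ n * c n <= B ^ n * (B - 1))%nat by (apply Nat.mul_le_mono_l; lia).
  assert (B ^ n * (B - 1) + B ^ n = B * B ^ n)%nat by (destruct B; [lia|]; simpl; rewrite Nat.sub_0_r; ring).
  lia.
Qed.

Lemma digits_unique n (B : nat) (c c' : nat -> nat) : (0 < B)%nat ->
  (forall l, (l < n)%nat -> (c l < B)%nat) -> (forall l, (l < n)%nat -> (c' l < B)%nat) ->
  nsum n (fun l => (B ^ l * c l)%nat) = nsum n (fun l => (B ^ l * c' l)%nat) ->
  forall l, (l < n)%nat -> c l = c' l.
Proof.
  induction n; intros HB Hc Hc' E l Hl; [lia|]. simpl in E.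
  pose proof (digits_lt n B c HB (fun l Hl => Hc l ltac:(lia))) as L1.
  pose proof (digits_lt n B c' HB (fun l Hl => Hc' l ltac:(lia))) as L2.
  assert (HBn : (B ^ n <> 0)%nat) by (apply Nat.pow_nonzero; lia).
  assert (Ecn : c n = c' n).
  { assert (Hq : forall c0, (nsum n (fun l => (B ^ l * c0 l)%nat) < B ^ n)%nat ->
              ((c0 n * B ^ n + nsum n (fun l => (B ^ l * c0 l)%nat)) / B ^ n = c0 n)%nat).
    { intros c0 Hc0. rewrite Nat.div_add_l, Nat.div_small by assumption. lia. }
    rewrite <- (Hq c L1), <- (Hq c' L2). f_equal. lia. }
  destruct (Nat.eq_dec l n) as [->|Hne]; [exact Ecn|].
  apply (IHn HB); try (intros; apply Hc || apply Hc'; lia); lia.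
Qed.

(** * Quantization blocks *)

Definition layer (n : nat) (W : nat -> nat -> R) (c h : nat -> R) : nat -> R :=
  fun i => sigma (affine n W c h i).

(* Neuron [(t, l, g)] of a block of width [D]: type [t < 5], coordinate [l < D], offset [g]. *)
Definition neuron (D t l g : nat) : nat := (t + 5 * (l + D * g))%nat.
Definition ntype (i : nat) : nat := (i mod 5)%nat.
Definition ncoord (D i : nat) : nat := ((i / 5) mod D)%nat.
Definition noffset (D i : nat) : nat := ((i / 5) / D)%nat.

Lemma neuron_div5 D t l g : (t < 5)%nat -> (neuron D t l g / 5 = l + g * D)%nat.
Proof.
  intros. unfold neuron. replace (t + 5 * (l + D * g))%nat with (t + (l + g * D) * 5)%nat by lia.
  rewrite Nat.div_add, Nat.div_small by lia. lia.
Qed.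

Lemma ntype_neuron D t l g : (t < 5)%nat -> ntype (neuron D t l g) = t.
Proof.
  intros. unfold ntype, neuron. replace (t + 5 * (l + D * g))%nat with (t + (l + D * g) * 5)%nat by lia.
  rewrite Nat.Div0.mod_add. apply Nat.mod_small. lia.
Qed.

Lemma ncoord_neuron D t l g : (t < 5)%nat -> (l < D)%nat -> ncoord D (neuron D t l g) = l.
Proof.
  intros. unfold ncoord. rewrite neuron_div5, Nat.Div0.mod_add by lia. apply Nat.mod_small. lia.
Qed.

Lemma noffset_neuron D t l g : (t < 5)%nat -> (l < D)%nat -> noffset D (neuron D t l g) = g.
Proof. intros. unfold noffset. rewrite neuron_div5, Nat.div_add, Nat.div_small by lia. lia. Qed.

Lemma neuron_lt D N m t l g : (5 * D * m <= N)%nat -> (t < 5)%nat -> (l < D)%nat -> (g < m)%nat ->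
  (neuron D t l g < N)%nat.
Proof. intros. unfold neuron. assert (l + D * g < D * m)%nat by nia. nia. Qed.

Ltac decode := repeat ((rewrite ntype_neuron by lia) || (rewrite ncoord_neuron by lia)
                       || (rewrite noffset_neuron by lia)).
Ltac decide_tests := repeat match goal with
  | |- context [Nat.ltb ?x ?y] => rewrite (proj2 (Nat.ltb_lt x y)) by lia
  | |- context [Nat.eqb ?x ?x] => rewrite Nat.eqb_refl
  end.
Ltac neuron_in_range := match goal with
  | H : (5 * ?D * ?m <= ?N)%nat |- (neuron ?D _ _ _ < ?N)%nat => apply (neuron_lt D N m); [exact H|lia..]
  end.
Ltac expand_sums := repeat ((rewrite sumn_add_mul) || (rewrite sumn_kron by neuron_in_range)).
Ltac eval_neuron W C := unfold layer, affine, W, C; decode; decide_tests; cbv beta iota zeta; expand_sums.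

(* A quantization block reads [t = affine n A alpha v] in [[0,1]^D].  For each
   of [m] grids, shifted by [g / m], it finds the cell [cell_index t g] of side
   [1 / K] containing [t]; neuron [(1, 0, g)] outputs [gate t g], positive only
   when [t] is well inside its cell, and neuron [(0, 0, g)] outputs the lookup
   value [sigma1 (w g / (P g - cell_index t g))]. *)
Section QuantizeBlock.
Variables (D m K : nat).

(* The shift [+ 2] keeps every sampled value where [sigma] agrees with [sigma1]. *)
Definition cell_u (t : nat -> R) (g l : nat) : R := INR K * t l + INR g / INR m + 2.

Definition coord_gate (t : nat -> R) (g l : nat) : R :=
  clip01 (2 * INR m * sigma1 (2 * cell_u t g l) - 1).
Definition gate (t : nat -> R) (g : nat) : R := clip01 (sumn D (coord_gate t g) - (INR D - 1)).
Definition digit (t : nat -> R) (g l : nat) : nat := Z.to_nat (Int_part (cell_u t g l) - 2).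
Definition cell_index (t : nat -> R) (g : nat) : nat := nsum D (fun l => (S K ^ l * digit t g l)%nat).

Definition margin : R := / (4 * INR m).
Definition gate_scale : R := 2 * INR m + 2.
Definition and_scale : R := INR D + 2.
Definition base : R := INR (S K).

Definition sampleW (A : nat -> nat -> R) (i j : nat) : R :=
  if Nat.ltb (noffset D i) m then
    match ntype i with
    | 0 | 1 | 2 => INR K * A (ncoord D i) j
    | 3 => 2 * INR K * A (ncoord D i) j
    | 4 => A (ncoord D i) j
    | _ => 0 end
  else 0.

Definition sampleC (alpha : nat -> R) (i : nat) : R :=
  let u := INR K * alpha (ncoord D i) + INR (noffset D i) / INR m + 2 in
  if Nat.ltb (noffset D i) m then
    match ntype i with
    | 0 => u | 1 => u - margin | 2 => u + margin | 3 => 2 * u | 4 => alpha (ncoord D i)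
    | _ => 0 end
  else 0.

Definition fracW (i j : nat) : R :=
  let l := ncoord D i in let g := noffset D i in
  if Nat.ltb g m then
    match ntype i with
    | 0 => kron j (neuron D 0 l g) 1 + kron j (neuron D 1 l g) (INR m) + kron j (neuron D 2 l g) (- INR m)
    | 1 | 2 => kron j (neuron D 3 l g) (2 * INR m / gate_scale)
    | 4 => kron j (neuron D 4 l g) 1
    | _ => 0 end
  else 0.

Definition fracC (i : nat) : R :=
  if Nat.ltb (noffset D i) m then
    match ntype i with 0 => 1 / 2 | 1 => - 1 / gate_scale + 2 | 2 => - 2 / gate_scale + 2 | _ => 0 end
  else 0.

Definition indexW (i j : nat) : R :=
  let g := noffset D i in
  if Nat.ltb g m then if Nat.eqb (ncoord D i) 0 then
    match ntype i with
    | 0 => sumn D (fun l => kron j (neuron D 4 l g) (base ^ l * INR K) + kron j (neuron D 0 l g) (- base ^ l))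
    | 1 | 2 => sumn D (fun l => kron j (neuron D 1 l g) (gate_scale / (2 * and_scale))
                              + kron j (neuron D 2 l g) (- gate_scale / (2 * and_scale)))
    | _ => 0 end
  else 0 else 0.

Definition indexC (P : nat -> R) (i : nat) : R :=
  let g := noffset D i in
  if Nat.ltb g m then if Nat.eqb (ncoord D i) 0 then
    match ntype i with
    | 0 => sumn D (fun l => base ^ l * (INR g / INR m)) - P g + 1
    | 1 => (INR D / 2 - (INR D - 1)) / and_scale + 2
    | 2 => (INR D / 2 - (INR D - 1) - 1) / and_scale + 2
    | _ => 0 end
  else 0 else 0.

Definition codeW (w : nat -> R) (i j : nat) : R :=
  let g := noffset D i in
  if Nat.ltb g m then if Nat.eqb (ncoord D i) 0 then
    match ntype i with
    | 0 => kron j (neuron D 0 0 g) (w g)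
    | 1 => kron j (neuron D 1 0 g) (and_scale / 2) + kron j (neuron D 2 0 g) (- and_scale / 2)
    | _ => 0 end
  else 0 else 0.

Definition codeC (w : nat -> R) (i : nat) : R :=
  let g := noffset D i in
  if Nat.ltb g m then if Nat.eqb (ncoord D i) 0 then
    match ntype i with 0 => w g | 1 => 1 / 2 | _ => 0 end
  else 0 else 0.

Definition quantize_block (N n : nat) (A : nat -> nat -> R) (alpha P w v : nat -> R) : nat -> R :=
  layer N (codeW w) (codeC w) (layer N indexW (indexC P) (layer N fracW fracC
    (layer n (sampleW A) (sampleC alpha) v))).

Hypothesis Hm : (0 < m)%nat.

Lemma INR_m_pos : 0 < INR m.
Proof. apply lt_0_INR. exact Hm. Qed.

Lemma cell_u_range t g l : in_cube D 0 1 t -> (l < D)%nat -> (g < m)%nat ->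
  2 <= cell_u t g l < INR K + 3.
Proof.
  intros Ht Hl Hg. specialize (Ht l Hl). pose proof INR_m_pos. pose proof (pos_INR K).
  assert (0 <= INR g / INR m < 1).
  { split; [apply Rmult_le_pos; [apply pos_INR|left; apply Rinv_0_lt_compat; lra]|].
    apply Rmult_lt_reg_r with (INR m); [lra|]. unfold Rdiv. rewrite Rmult_assoc, Rinv_l by lra.
    rewrite Rmult_1_r, Rmult_1_l. apply lt_INR. exact Hg. }
  unfold cell_u. split; nra.
Qed.

Lemma Int_part_cell_u t g l : in_cube D 0 1 t -> (l < D)%nat -> (g < m)%nat ->
  (2 <= Int_part (cell_u t g l) <= Z.of_nat K + 2)%Z.
Proof.
  intros Ht Hl Hg. pose proof (cell_u_range t g l Ht Hl Hg). split.
  - apply Int_part_ge. simpl. lra.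
  - apply Int_part_le. rewrite plus_IZR, <- INR_IZR_INZ. simpl. lra.
Qed.

Lemma digit_lt t g l : in_cube D 0 1 t -> (l < D)%nat -> (g < m)%nat -> (digit t g l < S K)%nat.
Proof. intros Ht Hl Hg. pose proof (Int_part_cell_u t g l Ht Hl Hg). unfold digit. lia. Qed.

Lemma cell_index_lt t g : in_cube D 0 1 t -> (g < m)%nat -> (cell_index t g < S K ^ D)%nat.
Proof. intros Ht Hg. apply digits_lt; [apply Nat.lt_0_succ|]. intros l Hl. apply digit_lt; assumption. Qed.

Lemma margin_spec : 0 < margin <= 1 / 4 /\ 2 * margin = / (2 * INR m).
Proof.
  pose proof INR_m_pos. assert (1 <= INR m) by (apply (le_INR 1); exact Hm).
  unfold margin. split; [split|].
  - apply Rinv_0_lt_compat. lra.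
  - apply Rmult_le_reg_r with (4 * INR m); [lra|]. rewrite Rinv_l; lra.
  - field. lra.
Qed.

Lemma gate_coord_pos t g l : (l < D)%nat -> 0 < gate t g -> 0 < coord_gate t g l.
Proof.
  intros Hl HG. apply clip01_pos in HG.
  destruct (Rlt_le_dec 0 (coord_gate t g l)) as [H|H]; [exact H|exfalso].
  pose proof (sumn_le_pred D (coord_gate t g) l Hl (fun k _ => proj2 (clip01_range _)) H). lra.
Qed.

(* With [m > D] offsets, for every coordinate at most one offset puts [cell_u]
   near an integer, so some offset has all its coordinate gates open. *)
Lemma gate_cover t : (D < m)%nat -> exists g, (g < m)%nat /\ gate t g = 1.
Proof.
  intros HDm. pose proof INR_m_pos.
  destruct (pigeonhole D m (fun l g => sigma1 (2 * cell_u t g l) < / INR m)) as [g [Hg Hav]];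
    [exact HDm| |].
  - intros l g g' Hl Hg Hg' H1 H2.
    destruct (sigma1_double_lt _ _ H1) as [q Hq]. destruct (sigma1_double_lt _ _ H2) as [q' Hq'].
    set (z := (Z.of_nat g' - Z.of_nat g - Z.of_nat m * (q' - q))%Z).
    assert (Ez : IZR z = INR m * ((cell_u t g' l - IZR q') - (cell_u t g l - IZR q))).
    { unfold z, cell_u. rewrite !minus_IZR, mult_IZR, minus_IZR, <- !INR_IZR_INZ. field. lra. }
    assert (Hz : Rabs (IZR z) < 1).
    { rewrite Ez, Rabs_mult, Rabs_right by lra.
      assert (Rabs ((cell_u t g' l - IZR q') - (cell_u t g l - IZR q)) < / INR m).
      { eapply Rle_lt_trans; [apply Rabs_triang|]. rewrite Rabs_Ropp. lra. }
      apply Rmult_lt_reg_l with (/ INR m); [apply Rinv_0_lt_compat; lra|].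
      rewrite <- Rmult_assoc, Rinv_l by lra. lra. }
    apply IZR_abs_lt1 in Hz. unfold z in Hz.
    destruct (Z.lt_trichotomy (q' - q) 0) as [Hn|[H0|Hp]]; [nia| |nia].
    rewrite H0 in Hz. lia.
  - exists g. split; [exact Hg|]. unfold gate.
    rewrite (sumn_ext _ _ (fun _ => 1)), sumn_const; [apply clip01_ge1; lra|].
    intros l Hl. specialize (Hav l Hl). apply Rnot_lt_le in Hav. unfold coord_gate. apply clip01_ge1.
    apply Rmult_le_compat_l with (r := 2 * INR m) in Hav; [|lra].
    rewrite Rmult_assoc, Rinv_r in Hav by lra. lra.
Qed.

Lemma cell_index_close t t' g : (0 < K)%nat -> in_cube D 0 1 t -> in_cube D 0 1 t' -> (g < m)%nat ->
  cell_index t g = cell_index t' g -> forall l, (l < D)%nat -> Rabs (t l - t' l) < / INR K.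
Proof.
  intros HK Ht Ht' Hg E l Hl.
  pose proof (digits_unique D (S K) _ _ ltac:(lia) (fun l Hl => digit_lt t g l Ht Hl Hg)
    (fun l Hl => digit_lt t' g l Ht' Hl Hg) E l Hl) as Edig.
  pose proof (Int_part_cell_u t g l Ht Hl Hg). pose proof (Int_part_cell_u t' g l Ht' Hl Hg).
  unfold digit in Edig. assert (Ek : Int_part (cell_u t g l) = Int_part (cell_u t' g l)) by lia.
  destruct (base_Int_part (cell_u t g l)) as [A1 A2].
  destruct (base_Int_part (cell_u t' g l)) as [B1 B2]. rewrite Ek in A1, A2.
  assert (HKR : 0 < INR K) by (apply lt_0_INR; lia).
  assert (Hu : Rabs (INR K * (t l - t' l)) < 1).
  { replace (INR K * (t l - t' l)) with (cell_u t g l - cell_u t' g l) by (unfold cell_u; ring).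
    apply Rabs_def1; lra. }
  rewrite Rabs_mult, Rabs_right in Hu by lra.
  apply Rmult_lt_reg_l with (INR K); [lra|]. rewrite Rinv_r; lra.
Qed.

Variable N : nat.
Hypotheses (HD : (0 < D)%nat) (HN : (5 * D * m <= N)%nat).

Lemma sample_layer n A alpha v l g : (l < D)%nat -> (g < m)%nat ->
  let t := affine n A alpha v in let h := layer n (sampleW A) (sampleC alpha) v in
  h (neuron D 0 l g) = sigma (cell_u t g l) /\
  h (neuron D 1 l g) = sigma (cell_u t g l - margin) /\
  h (neuron D 2 l g) = sigma (cell_u t g l + margin) /\
  h (neuron D 3 l g) = sigma (2 * cell_u t g l) /\
  h (neuron D 4 l g) = sigma (t l).
Proof.
  intros Hl Hg t h. subst t h.
  assert (Hs : forall c, sumn n (fun j => c * A l j * v j) = c * sumn n (fun j => A l j * v j)).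
  { intros c. rewrite <- sumn_scal. apply sumn_ext. intros; ring. }
  repeat split; eval_neuron sampleW sampleC; rewrite ?Hs; f_equal; unfold cell_u; ring.
Qed.

Lemma frac_layer h l g : (l < D)%nat -> (g < m)%nat ->
  let h' := layer N fracW fracC h in
  h' (neuron D 0 l g) = sigma (h (neuron D 0 l g)
      + (h (neuron D 1 l g) - h (neuron D 2 l g) + 2 * margin) / (4 * margin)) /\
  h' (neuron D 1 l g) = sigma ((2 * INR m * h (neuron D 3 l g) - 1) / gate_scale + 2) /\
  h' (neuron D 2 l g) = sigma ((2 * INR m * h (neuron D 3 l g) - 1 - 1) / gate_scale + 2) /\
  h' (neuron D 4 l g) = sigma (h (neuron D 4 l g)).
Proof.
  intros Hl Hg h'. subst h'. pose proof INR_m_pos.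
  assert (0 < gate_scale) by (unfold gate_scale; lra).
  repeat split; eval_neuron fracW fracC; f_equal; unfold margin; field; lra.
Qed.

Lemma index_layer P h g : (g < m)%nat ->
  let h' := layer N indexW (indexC P) h in
  h' (neuron D 0 0 g) = sigma (sumn D (fun l => base ^ l *
      (INR K * h (neuron D 4 l g) + INR g / INR m - h (neuron D 0 l g))) - (P g - 1)) /\
  h' (neuron D 1 0 g) = sigma ((sumn D (fun l => (gate_scale * h (neuron D 1 l g)
      - gate_scale * h (neuron D 2 l g) + 1) / 2) - (INR D - 1)) / and_scale + 2) /\
  h' (neuron D 2 0 g) = sigma ((sumn D (fun l => (gate_scale * h (neuron D 1 l g)
      - gate_scale * h (neuron D 2 l g) + 1) / 2) - (INR D - 1) - 1) / and_scale + 2).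
Proof.
  intros Hg h'. subst h'.
  assert (0 < and_scale) by (unfold and_scale; pose proof (pos_INR D); lra).
  assert (Hidx : forall l, (l < D)%nat ->
    sumn N (fun j => (kron j (neuron D 4 l g) (base ^ l * INR K) + kron j (neuron D 0 l g) (- base ^ l)) * h j)
    = base ^ l * (INR K * h (neuron D 4 l g) + INR g / INR m - h (neuron D 0 l g)) - base ^ l * (INR g / INR m)).
  { intros l Hl. expand_sums. ring. }
  assert (Hand : forall c, sumn D (fun l => sumn N (fun j =>
      (kron j (neuron D 1 l g) (gate_scale / (2 * and_scale))
       + kron j (neuron D 2 l g) (- gate_scale / (2 * and_scale))) * h j)) + ((INR D / 2 - c) / and_scale + 2)
    = (sumn D (fun l => (gate_scale * h (neuron D 1 l g) - gate_scale * h (neuron D 2 l g) + 1) / 2) - c)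
      / and_scale + 2).
  { intros c.
    rewrite (sumn_ext D _ (fun l => gate_scale / (2 * and_scale) * (h (neuron D 1 l g) - h (neuron D 2 l g))))
      by (intros l Hl; expand_sums; unfold Rdiv; ring).
    rewrite (sumn_ext D (fun l => (gate_scale * h (neuron D 1 l g) - gate_scale * h (neuron D 2 l g) + 1) / 2)
      (fun l => and_scale * (gate_scale / (2 * and_scale) * (h (neuron D 1 l g) - h (neuron D 2 l g))) + 1 / 2))
      by (intros; field; lra).
    rewrite sumn_plus, !sumn_scal, sumn_const. field. lra. }
  repeat split; eval_neuron indexW indexC; rewrite ?sumn_sum_mul; f_equal.
  - rewrite (sumn_ext _ _ _ Hidx), sumn_minus. lra.
  - rewrite Hand. reflexivity.
  - replace ((INR D / 2 - (INR D - 1) - 1) / and_scale + 2)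
      with ((INR D / 2 - (INR D - 1 + 1)) / and_scale + 2) by (unfold Rdiv; ring).
    rewrite Hand. f_equal. f_equal. ring.
Qed.

Lemma code_layer w h g : (g < m)%nat ->
  let h' := layer N (codeW w) (codeC w) h in
  h' (neuron D 0 0 g) = sigma (w g * (h (neuron D 0 0 g) + 1)) /\
  h' (neuron D 1 0 g) = sigma ((and_scale * h (neuron D 1 0 g) - and_scale * h (neuron D 2 0 g) + 1) / 2).
Proof.
  intros Hg h'. subst h'.
  split; eval_neuron codeW codeC; f_equal; field.
Qed.

Lemma frac_spec n A alpha v l g : in_cube D 0 1 (affine n A alpha v) -> (l < D)%nat -> (g < m)%nat ->
  let t := affine n A alpha v in
  let h := layer N fracW fracC (layer n (sampleW A) (sampleC alpha) v) in
  h (neuron D 4 l g) = t l /\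
  (gate_scale * h (neuron D 1 l g) - gate_scale * h (neuron D 2 l g) + 1) / 2 = coord_gate t g l /\
  (0 < coord_gate t g l -> h (neuron D 0 l g) = cell_u t g l - IZR (Int_part (cell_u t g l))).
Proof.
  intros Ht Hl Hg t h. change (in_cube D 0 1 t) in Ht.
  destruct (sample_layer n A alpha v l g Hl Hg) as [S0 [S1 [S2 [S3 S4]]]].
  destruct (frac_layer (layer n (sampleW A) (sampleC alpha) v) l g Hl Hg) as [F0 [F1 [F2 F4]]].
  fold t in S0, S1, S2, S3, S4. fold h in F0, F1, F2, F4.
  pose proof (cell_u_range t g l Ht Hl Hg) as Hu. pose proof (Ht l Hl).
  pose proof INR_m_pos. destruct margin_spec as [Hmg Hmg2].
  pose proof (sigma1_range (2 * cell_u t g l)).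
  rewrite (sigma_nonneg (2 * cell_u t g l)) in S3 by lra.
  split; [|split].
  - rewrite F4, S4, (sigma_id (t l)), sigma_id; lra.
  - rewrite F1, F2, S3. apply sigma_clip01; unfold gate_scale; [lra| |]; apply Rabs_le; nra.
  - intros Hpos. apply clip01_pos in Hpos.
    assert (Hgap : 2 * margin < sigma1 (2 * cell_u t g l)).
    { rewrite Hmg2. apply Rmult_lt_reg_l with (2 * INR m); [lra|]. rewrite Rinv_r; lra. }
    rewrite F0, S0, S1, S2. apply sigma_frac_part; [lra|lra|].
    apply sigma1_double_gt; lra.
Qed.

Lemma index_spec n A alpha P v g : in_cube D 0 1 (affine n A alpha v) -> (g < m)%nat ->
  let t := affine n A alpha v in
  let h := layer N indexW (indexC P) (layer N fracW fracC (layer n (sampleW A) (sampleC alpha) v)) in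
  (and_scale * h (neuron D 1 0 g) - and_scale * h (neuron D 2 0 g) + 1) / 2 = gate t g /\
  (0 < gate t g -> h (neuron D 0 0 g) = sigma (INR (cell_index t g) - (P g - 1))).
Proof.
  intros Ht Hg t h.
  destruct (index_layer P (layer N fracW fracC (layer n (sampleW A) (sampleC alpha) v)) g Hg)
    as [I0 [I1 I2]]. fold h in I0, I1, I2.
  split.
  - rewrite I1, I2.
    rewrite (sumn_ext _ _ (coord_gate t g)) by (intros l Hl; apply (frac_spec n A alpha v l g Ht Hl Hg)).
    assert (0 <= sumn D (coord_gate t g) <= INR D).
    { split; [apply sumn_nonneg|rewrite <- (Rmult_1_r (INR D)); apply sumn_le_const];
        intros; apply clip01_range. }
    pose proof (pos_INR D).
    apply sigma_clip01; unfold and_scale; [lra| |]; apply Rabs_le; lra.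
  - intros HG. rewrite I0. f_equal. f_equal.
    unfold cell_index. rewrite INR_nsum. apply sumn_ext. intros l Hl.
    destruct (frac_spec n A alpha v l g Ht Hl Hg) as [T4 [_ T0]].
    rewrite T4, (T0 (gate_coord_pos t g l Hl HG)), mult_INR, pow_INR. unfold base. f_equal.
    pose proof (Int_part_cell_u t g l Ht Hl Hg). unfold digit.
    unfold t in *. rewrite (INR_IZR_INZ (Z.to_nat _)), Z2Nat.id, minus_IZR by lia. unfold cell_u. simpl.
    unfold Rdiv. ring.
Qed.

Theorem quantize_block_spec n A alpha P w v g : in_cube D 0 1 (affine n A alpha v) -> (g < m)%nat ->
  let t := affine n A alpha v in let h := quantize_block N n A alpha P w v in
  h (neuron D 1 0 g) = gate t g /\
  (0 < gate t g -> INR (S K ^ D) + 1 < P g -> 0 <= w g ->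
   h (neuron D 0 0 g) = sigma1 (w g / (P g - INR (cell_index t g)))).
Proof.
  intros Ht Hg t h.
  destruct (code_layer w (layer N indexW (indexC P) (layer N fracW fracC
    (layer n (sampleW A) (sampleC alpha) v))) g Hg) as [C0 C1].
  destruct (index_spec n A alpha P v g Ht Hg) as [I1 I0].
  split.
  - unfold h, quantize_block. rewrite C1, I1. apply sigma_id, clip01_range.
  - intros HG HP Hw. unfold h, quantize_block. rewrite C0, (I0 HG).
    pose proof (lt_INR _ _ (cell_index_lt t g Ht Hg)).
    apply sigma_code; [exact Hw|apply pos_INR|lra].
Qed.

End QuantizeBlock.

(** * The network *)

Section Network.
Variables (d K K2 : nat) (a b lo hi : R) (Pm wm P2 w2 : nat -> R).

Definition net_width : nat := (36 * d * (2 * d + 1))%nat.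

Definition input_map (l j : nat) : R := kron j l (/ (b - a)).
Definition input_shift (l : nat) : R := - a / (b - a).

Definition sumW (i j : nat) : R :=
  let g := noffset d i in
  if Nat.ltb g (S d) then if Nat.eqb (ncoord d i) 0 then
    match ntype i with
    | 0 | 1 => kron j (neuron d 0 0 g) (1 / 3) + kron j (neuron d 1 0 g) (1 / 3)
    | _ => 0 end
  else 0 else 0.

Definition sumC (i : nat) : R :=
  let g := noffset d i in
  if Nat.ltb g (S d) then if Nat.eqb (ncoord d i) 0 then
    match ntype i with 0 => - 1 / 3 + 2 | 1 => - 2 / 3 + 2 | _ => 0 end
  else 0 else 0.

Definition stage1 (x : nat -> R) : nat -> R :=
  layer net_width sumW sumC (quantize_block d (S d) K net_width d input_map input_shift Pm wm x).

Definition stage1_value (v : nat -> R) : R :=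
  sumn (S d) (fun g => (3 * v (neuron d 0 0 g) - 3 * v (neuron d 1 0 g) + 1) / 2).

Definition value_map (l j : nat) : R :=
  sumn (S d) (fun g => kron j (neuron d 0 0 g) (3 / (2 * INR (S d)))
                     + kron j (neuron d 1 0 g) (- 3 / (2 * INR (S d)))).
Definition value_shift (l : nat) : R := 1 / 2.

Definition value_res : nat := (K2 * S d)%nat.

Definition maxW1 (i j : nat) : R :=
  match i with
  | 0 => kron j (neuron 1 0 0 0) (1 / 4) + kron j (neuron 1 1 0 0) (1 / 4)
       + kron j (neuron 1 0 0 1) (- 1 / 4) + kron j (neuron 1 1 0 1) (- 1 / 4)
  | 1 => kron j (neuron 1 0 0 0) (1 / 8) + kron j (neuron 1 1 0 0) (1 / 8)
       + kron j (neuron 1 0 0 1) (1 / 8) + kron j (neuron 1 1 0 1) (1 / 8)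
  | _ => 0 end.
Definition maxC1 (i : nat) : R := match i with 0 => 2 | 1 => 1 / 4 | _ => 0 end.
Definition maxW2 (i j : nat) : R :=
  match i with 0 => kron j (neuron 1 0 0 0) (1 / 2) + kron j (neuron 1 1 0 0) 1 | _ => 0 end.
Definition maxC2 (i : nat) : R := 0.

Definition Ws (k : nat) : nat -> nat -> R :=
  match k with
  | 1 => fracW d (S d) | 2 => indexW d (S d) K | 3 => codeW d (S d) wm | 4 => sumW
  | 5 => sampleW 1 2 value_res value_map | 6 => fracW 1 2 | 7 => indexW 1 2 value_res | 8 => codeW 1 2 w2
  | 9 => maxW1 | 10 => maxW2
  | _ => fun _ _ => 0 end.
Definition cs (k : nat) : nat -> R :=
  match k with
  | 1 => fracC d (S d) | 2 => indexC d (S d) K Pm | 3 => codeC d (S d) wm | 4 => sumC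
  | 5 => sampleC 1 2 value_res value_shift | 6 => fracC 1 2 | 7 => indexC 1 2 value_res P2 | 8 => codeC 1 2 w2
  | 9 => maxC1 | 10 => maxC2
  | _ => fun _ => 0 end.
Definition WL (j : nat) : R := kron j 0 (4 * (hi - lo)).
Definition cL : R := lo - 2 * (hi - lo).

Definition approximant : (nat -> R) -> R :=
  network d net_width 11 (sampleW d (S d) K input_map) (sampleC d (S d) K input_shift) Ws cs WL cL.

Definition stage2 (x : nat -> R) : nat -> R :=
  quantize_block 1 2 value_res net_width net_width value_map value_shift P2 w2 (stage1 x).

Hypothesis Hd : (0 < d)%nat.

Lemma net_width_ge : (5 * d * S d <= net_width)%nat /\ (5 * 1 * 2 <= net_width)%nat.
Proof. unfold net_width. split; nia. Qed.

Lemma approximant_eq x : approximant x =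
  4 * (hi - lo) * layer net_width maxW2 maxC2 (layer net_width maxW1 maxC1 (stage2 x)) 0 + cL.
Proof.
  unfold approximant, network. cbv zeta. unfold WL.
  rewrite sumn_kron by (pose proof net_width_ge; lia). reflexivity.
Qed.

Hypothesis Hab : a < b.

Definition cube_coords (x : nat -> R) : nat -> R := affine d input_map input_shift x.

Lemma cube_coords_eq x l : (l < d)%nat -> cube_coords x l = (x l - a) / (b - a).
Proof.
  intros Hl. unfold cube_coords, affine, input_map, input_shift.
  rewrite sumn_kron by exact Hl. field. lra.
Qed.

Lemma cube_coords_in x : in_cube d a b x -> in_cube d 0 1 (cube_coords x).
Proof.
  intros Hx l Hl. rewrite cube_coords_eq by exact Hl. specialize (Hx l Hl).
  split; [apply Rmult_le_pos; [lra|left; apply Rinv_0_lt_compat; lra]|].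
  apply Rmult_le_reg_r with (b - a); [lra|]. unfold Rdiv. rewrite Rmult_assoc, Rinv_l; lra.
Qed.

Lemma sum_layer v g : (g < S d)%nat ->
  layer net_width sumW sumC v (neuron d 0 0 g) = sigma ((v (neuron d 0 0 g) - 1 + v (neuron d 1 0 g)) / 3 + 2) /\
  layer net_width sumW sumC v (neuron d 1 0 g) = sigma ((v (neuron d 0 0 g) - 1 + v (neuron d 1 0 g) - 1) / 3 + 2).
Proof.
  intros Hg. pose proof net_width_ge as [HW _].
  split; eval_neuron sumW sumC; f_equal; field.
Qed.

Definition stage1_code (x : nat -> R) (g : nat) : R :=
  quantize_block d (S d) K net_width d input_map input_shift Pm wm x (neuron d 0 0 g).

Lemma stage1_value_eq x : in_cube d a b x ->
  stage1_value (stage1 x)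
  = sumn (S d) (fun g => clip01 (stage1_code x g - 1 + gate d (S d) K (cube_coords x) g)).
Proof.
  intros Hx. apply sumn_ext. intros g Hg. pose proof net_width_ge as [HW _].
  destruct (sum_layer (quantize_block d (S d) K net_width d input_map input_shift Pm wm x) g Hg) as [S0 S1].
  destruct (quantize_block_spec d (S d) K ltac:(lia) net_width Hd HW d input_map input_shift Pm wm x g
              (cube_coords_in x Hx) Hg) as [Hgate _].
  unfold stage1. rewrite S0, S1. cbv zeta in Hgate. rewrite Hgate. fold (cube_coords x).
  unfold stage1_code. set (E := quantize_block _ _ _ _ _ _ _ _ _ _ _).
  assert (HE : Rabs E <= 1) by (unfold E, quantize_block, layer; apply Rabs_sigma_le).
  apply Rabs_le_inv in HE. pose proof (clip01_range (sumn d (coord_gate (S d) K (cube_coords x) g) - (INR d - 1))) as HG.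
  fold (gate d (S d) K (cube_coords x) g) in HG.
  apply sigma_clip01; [lra| |]; apply Rabs_le; lra.
Qed.

Lemma stage1_value_range x : in_cube d a b x -> 0 <= stage1_value (stage1 x) <= INR (S d).
Proof.
  intros Hx. rewrite stage1_value_eq by exact Hx. split.
  - apply sumn_nonneg. intros; apply clip01_range.
  - rewrite <- (Rmult_1_r (INR (S d))). apply sumn_le_const. intros; apply clip01_range.
Qed.

Definition value_coord (x : nat -> R) : nat -> R := affine net_width value_map value_shift (stage1 x).

Lemma value_coord_eq x l : value_coord x l = stage1_value (stage1 x) / INR (S d).
Proof.
  pose proof net_width_ge as [HW _]. pose proof (lt_0_INR (S d) ltac:(lia)).
  unfold value_coord, affine, value_map, value_shift, stage1_value. rewrite sumn_sum_mul.
  set (v := stage1 x).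
  rewrite (sumn_ext _ _ (fun g => 3 / (2 * INR (S d)) * (v (neuron d 0 0 g) - v (neuron d 1 0 g))))
    by (intros g Hg; expand_sums; unfold Rdiv; ring).
  rewrite (sumn_ext _ (fun g => (3 * v (neuron d 0 0 g) - 3 * v (neuron d 1 0 g) + 1) / 2)
    (fun g => INR (S d) * (3 / (2 * INR (S d)) * (v (neuron d 0 0 g) - v (neuron d 1 0 g))) + 1 / 2))
    by (intros; field; lra).
  rewrite sumn_plus, !sumn_scal, sumn_const. field. lra.
Qed.

Lemma value_coord_in x : in_cube d a b x -> in_cube 1 0 1 (value_coord x).
Proof.
  intros Hx l _. rewrite value_coord_eq. pose proof (stage1_value_range x Hx).
  pose proof (lt_0_INR (S d) ltac:(lia)).
  split; [apply Rmult_le_pos; [lra|left; apply Rinv_0_lt_compat; lra]|].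
  apply Rmult_le_reg_r with (INR (S d)); [lra|]. unfold Rdiv. rewrite Rmult_assoc, Rinv_l; lra.
Qed.

Definition stage2_out (x : nat -> R) (r : nat) : R :=
  stage2 x (neuron 1 0 0 r) - 1 + stage2 x (neuron 1 1 0 r).

Lemma approximant_max x : in_cube d a b x ->
  approximant x = lo + (hi - lo) * Rmax (stage2_out x 0) (stage2_out x 1).
Proof.
  intros Hx. pose proof net_width_ge as [_ HW].
  assert (Hy : forall r, (r < 2)%nat -> -2 <= stage2_out x r <= 1).
  { intros r Hr. unfold stage2_out.
    destruct (quantize_block_spec 1 2 value_res ltac:(lia) net_width ltac:(lia) HW net_width value_map value_shift
                P2 w2 (stage1 x) r (value_coord_in x Hx) Hr) as [Hgate _].
    cbv zeta in Hgate. fold (value_coord x) in Hgate. unfold stage2. rewrite Hgate.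
    pose proof (clip01_range (sumn 1 (coord_gate 2 value_res (value_coord x) r) - (INR 1 - 1))) as HG.
    fold (gate 1 2 value_res (value_coord x) r) in HG.
    assert (HE : Rabs (quantize_block 1 2 value_res net_width net_width value_map value_shift P2 w2 (stage1 x)
                         (neuron 1 0 0 r)) <= 1)
      by (unfold quantize_block, layer; apply Rabs_sigma_le).
    apply Rabs_le_inv in HE. lra. }
  set (h := layer net_width maxW1 maxC1 (stage2 x)).
  assert (L2 : layer net_width maxW2 maxC2 h 0%nat = sigma ((h 0%nat + 2 * h 1%nat) / 2)).
  { unfold layer at 1. unfold affine, maxW2, maxC2. expand_sums. f_equal.
    change (neuron 1 0 0 0) with 0%nat; change (neuron 1 1 0 0) with 1%nat. field. }
  assert (L0 : h 0%nat = sigma ((stage2_out x 0 - stage2_out x 1) / 4 + 2)).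
  { unfold h, layer, affine, maxW1, maxC1. expand_sums. f_equal. unfold stage2_out. field. }
  assert (L1 : h 1%nat = sigma ((stage2_out x 0 + stage2_out x 1 + 4) / 8)).
  { unfold h, layer, affine, maxW1, maxC1. expand_sums. f_equal. unfold stage2_out. field. }
  rewrite approximant_eq; fold h. rewrite L2, L0, L1.
  rewrite <- (sigma_max (stage2_out x 0) (stage2_out x 1)) by (apply Hy; lia).
  unfold cL. ring.
Qed.

End Network.

(** * Approximation *)

Lemma exp_le_mono x y : x <= y -> exp x <= exp y.
Proof. intros [H|<-]; [left; apply exp_increasing; exact H|right; reflexivity]. Qed.

Lemma sumn_gated_bounds n (E G : nat -> R) lo' hi' g0 : (g0 < n)%nat -> 0 < hi' ->
  (forall g, (g < n)%nat -> E g <= 1 /\ 0 <= G g <= 1) -> G g0 = 1 ->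
  (forall g, (g < n)%nat -> 0 < G g -> lo' <= E g <= hi') ->
  lo' <= sumn n (fun g => clip01 (E g - 1 + G g)) <= INR n * hi'.
Proof.
  intros Hg0 Hhi HEG HG0 Hopen. split.
  - apply Rle_trans with (clip01 (E g0 - 1 + G g0)).
    + rewrite HG0. replace (E g0 - 1 + 1) with (E g0) by ring.
      destruct (HEG g0 Hg0). pose proof (Hopen g0 Hg0 ltac:(lra)). pose proof (clip01_ge (E g0)). lra.
    + apply (sumn_ge_term n (fun g => clip01 (E g - 1 + G g)) g0 Hg0). intros; apply clip01_range.
  - apply sumn_le_const. intros g Hg. destruct (HEG g Hg) as [HE HG].
    destruct (Rlt_le_dec 0 (G g)) as [Hpos|Hz].
    + pose proof (Hopen g Hg Hpos). eapply Rle_trans; [apply clip01_le_max|].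
      unfold Rmax; destruct Rle_dec; lra.
    + rewrite clip01_le0; lra.
Qed.

Lemma max_gated_close (E G : nat -> R) F e : 0 <= F ->
  (forall r, (r < 2)%nat -> E r <= 1 /\ 0 <= G r <= 1) ->
  (forall r, (r < 2)%nat -> 0 < G r -> Rabs (E r - F) < e) ->
  (exists r, (r < 2)%nat /\ G r = 1) ->
  Rabs (Rmax (E 0%nat - 1 + G 0%nat) (E 1%nat - 1 + G 1%nat) - F) < e.
Proof.
  intros HF HEG Hclose [r0 [Hr0 HG0]].
  assert (Up : forall r, (r < 2)%nat -> E r - 1 + G r < F + e).
  { intros r Hr. destruct (HEG r Hr). destruct (Rlt_le_dec 0 (G r)) as [Hpos|Hz].
    - pose proof (Rabs_def2 _ _ (Hclose r Hr Hpos)). lra.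
    - assert (0 < e) by (specialize (Hclose r0 Hr0 ltac:(lra)); pose proof (Rabs_pos (E r0 - F)); lra).
      lra. }
  assert (Lo : F - e < Rmax (E 0%nat - 1 + G 0%nat) (E 1%nat - 1 + G 1%nat)).
  { pose proof (Rabs_def2 _ _ (Hclose r0 Hr0 ltac:(lra))).
    destruct r0 as [|[|r0]]; [| |lia]; rewrite HG0 in *.
    - eapply Rlt_le_trans; [|apply Rmax_l]. lra.
    - eapply Rlt_le_trans; [|apply Rmax_r]. lra. }
  pose proof (Rmax_lub_lt _ _ _ (Up 0%nat ltac:(lia)) (Up 1%nat ltac:(lia))).
  apply Rabs_def1; lra.
Qed.

(* The encoding [F |-> exp (C (F - 1))] is so steep that values known only up to
   the factor [m] and an additive [h] still determine [F] up to [3 e]. *)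
Lemma exp_code_separates C e m eta Fx Fy Sx Sy h : 0 < e -> 1 <= m ->
  0 <= Fx <= 1 -> 0 <= Fy <= 1 -> C = (4 * m + 2) / e -> eta = exp (- C * (1 + e)) / 2 ->
  0 < h <= exp (- C) ->
  exp (C * (Fx - e - 1)) - eta <= Sx -> Sy <= m * (exp (C * (Fy + e - 1)) + eta) -> Sx <= Sy + h ->
  Fx - Fy < 3 * e.
Proof.
  intros He Hm HFx HFy HC Heta Hh H1 H2 H3.
  assert (HCpos : 0 < C) by (rewrite HC; apply Rdiv_lt_0_compat; lra).
  assert (HCe : C * e = 4 * m + 2) by (rewrite HC; field; lra).
  set (A := exp (C * (Fy + e - 1))) in *.
  assert (HA1 : exp (- C) <= A) by (apply exp_le_mono; nra).
  assert (Heta2 : 2 * eta <= exp (- C)) by (rewrite Heta; apply Rle_trans with (exp (- C * (1 + e))); [lra|apply exp_le_mono; nra]).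
  assert (Heta0 : 0 < eta) by (rewrite Heta; pose proof (exp_pos (- C * (1 + e))); lra).
  assert (HB : 2 * eta <= exp (C * (Fx - e - 1)))
    by (rewrite Heta; apply Rle_trans with (exp (- C * (1 + e))); [lra|apply exp_le_mono; nra]).
  assert (Key : exp (C * (Fx - Fy - 2 * e)) * A <= (4 * m + 2) * A).
  { replace (exp (C * (Fx - Fy - 2 * e)) * A) with (exp (C * (Fx - e - 1)))
      by (unfold A; rewrite <- exp_plus; f_equal; ring).
    assert (m * eta <= m * A) by (apply Rmult_le_compat_l; lra). nra. }
  apply Rmult_le_reg_r in Key; [|apply exp_pos].
  pose proof (exp_ineq1 (4 * m + 2) ltac:(lra)). rewrite <- HCe in *.
  destruct (Rlt_le_dec (Fx - Fy - 2 * e) e) as [L|L]; [lra|].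
  pose proof (exp_le_mono (C * e) (C * (Fx - Fy - 2 * e)) ltac:(nra)). lra.
Qed.

Lemma choose_representatives {X : Type} (x0 : X) (P : X -> nat -> Prop) (idx : X -> nat -> nat) :
  exists rep : nat -> nat -> X, forall x g, P x g -> P (rep g (idx x g)) g /\ idx (rep g (idx x g)) g = idx x g.
Proof.
  exists (fun g n => epsilon (inhabits x0) (fun y => P y g /\ idx y g = n)).
  intros x g Hx. apply (epsilon_spec (inhabits x0) (fun y => P y g /\ idx y g = idx x g)).
  exists x. split; [exact Hx|reflexivity].
Qed.

Section Approximation.
Variables (d : nat) (a b : R) (F : (nat -> R) -> R) (e : R) (K : nat).
Hypotheses (Hd : (0 < d)%nat) (Hab : a < b) (He : 0 < e) (HK : (0 < K)%nat).
Hypothesis HF : forall x, in_cube d a b x -> 0 <= F x <= 1.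
Hypothesis HFK : forall x y, in_cube d a b x -> in_cube d a b y ->
  (forall l, (l < d)%nat -> Rabs (cube_coords d a b x l - cube_coords d a b y l) < / INR K) ->
  Rabs (F x - F y) < e.

Definition steep : R := (4 * INR (S d) + 2) / e.
Definition slack : R := exp (- steep * (1 + e)) / 2.

Definition gate1 (x : nat -> R) (g : nat) : R := gate d (S d) K (cube_coords d a b x) g.
Definition index1 (x : nat -> R) (g : nat) : nat := cell_index d (S d) K (cube_coords d a b x) g.

Lemma steep_pos : 0 < steep.
Proof. unfold steep. apply Rdiv_lt_0_compat; [pose proof (pos_INR (S d))|]; lra. Qed.

Lemma stage1_code_bounds Pm wm (rep : nat -> nat -> nat -> R) :
  (forall g, INR (S K ^ d) + 1 < Pm g /\ 0 <= wm g /\ forall n, (n < S K ^ d)%nat ->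
     Rabs (sigma1 (wm g / (Pm g - INR n)) - exp (steep * (clip01 (F (rep g n)) - 1))) < slack) ->
  (forall x g, in_cube d a b x /\ 0 < gate1 x g ->
     (in_cube d a b (rep g (index1 x g)) /\ 0 < gate1 (rep g (index1 x g)) g) /\
     index1 (rep g (index1 x g)) g = index1 x g) ->
  forall x g, in_cube d a b x -> (g < S d)%nat -> 0 < gate1 x g ->
  exp (steep * (F x - e - 1)) - slack <= stage1_code d K a b Pm wm x g <= exp (steep * (F x + e - 1)) + slack.
Proof.
  intros Hlook Hrep x g Hx Hg HG.
  destruct (Hrep x g (conj Hx HG)) as [[Hy _] Hidx].
  set (y := rep g (index1 x g)) in *.
  destruct (Hlook g) as [HP [Hw Hacc]].
  pose proof (cell_index_lt d (S d) K ltac:(lia) _ g (cube_coords_in d a b Hab x Hx) Hg) as Hn.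
  specialize (Hacc _ Hn). fold (index1 x g) in Hacc. fold y in Hacc.
  destruct (quantize_block_spec d (S d) K ltac:(lia) (net_width d) Hd (proj1 (net_width_ge d Hd)) d
    (input_map a b) (input_shift a b) Pm wm x g (cube_coords_in d a b Hab x Hx) Hg) as [_ Hcode].
  unfold stage1_code. rewrite (Hcode HG HP Hw). fold (cube_coords d a b x) (index1 x g).
  assert (Hxy : Rabs (F x - F y) < e).
  { apply HFK; [exact Hx|exact Hy|]. intros l Hl.
    apply (cell_index_close d (S d) K ltac:(lia) _ _ g HK (cube_coords_in d a b Hab x Hx)
             (cube_coords_in d a b Hab y Hy) Hg); [symmetry; exact Hidx|exact Hl]. }
  rewrite clip01_id in Hacc by (apply HF; exact Hy).
  apply Rabs_def2 in Hxy. apply Rabs_def2 in Hacc. pose proof steep_pos.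
  pose proof (exp_le_mono (steep * (F x - e - 1)) (steep * (F y - 1)) ltac:(nra)).
  pose proof (exp_le_mono (steep * (F y - 1)) (steep * (F x + e - 1)) ltac:(nra)).
  lra.
Qed.

Lemma stage1_encoding : exists Pm wm : nat -> R, forall x, in_cube d a b x ->
  exp (steep * (F x - e - 1)) - slack <= stage1_value d (stage1 d K a b Pm wm x)
  <= INR (S d) * (exp (steep * (F x + e - 1)) + slack).
Proof.
  destruct (choose_representatives (fun _ : nat => a) (fun x g => in_cube d a b x /\ 0 < gate1 x g) index1)
    as [rep Hrep].
  destruct (lookup_family (S K ^ d) (fun g n => exp (steep * (clip01 (F (rep g n)) - 1))) slack)
    as [Pm [wm Hlook]].
  { intros g n _. pose proof (clip01_range (F (rep g n))). pose proof steep_pos.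
    split; [left; apply exp_pos|]. rewrite <- exp_0 at 2. apply exp_le_mono. nra. }
  { unfold slack. pose proof (exp_pos (- steep * (1 + e))). lra. }
  exists Pm, wm. intros x Hx.
  assert (Hslack : 0 < slack) by (unfold slack; pose proof (exp_pos (- steep * (1 + e))); lra).
  destruct (gate_cover d (S d) K ltac:(lia) (cube_coords d a b x) ltac:(lia)) as [g0 [Hg0 HG0]].
  rewrite stage1_value_eq by assumption.
  apply (sumn_gated_bounds _ _ _ _ _ g0 Hg0); [pose proof (exp_pos (steep * (F x + e - 1))); lra| |exact HG0|].
  - intros g Hg. split; [|apply clip01_range].
    unfold stage1_code, quantize_block, layer. apply Rabs_le_inv, Rabs_sigma_le.
  - intros g Hg HG. apply (stage1_code_bounds Pm wm rep Hlook Hrep); assumption.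
Qed.

Variables (Pm wm : nat -> R) (K2 : nat).
Hypothesis Henc : forall x, in_cube d a b x ->
  exp (steep * (F x - e - 1)) - slack <= stage1_value d (stage1 d K a b Pm wm x)
  <= INR (S d) * (exp (steep * (F x + e - 1)) + slack).
Hypothesis HK2 : exp steep < INR K2.

Definition encoding (x : nat -> R) : R := stage1_value d (stage1 d K a b Pm wm x).
Definition gate2 (x : nat -> R) (r : nat) : R := gate 1 2 (value_res d K2) (value_coord d K a b Pm wm x) r.
Definition index2 (x : nat -> R) (r : nat) : nat :=
  cell_index 1 2 (value_res d K2) (value_coord d K a b Pm wm x) r.

Lemma K2_pos : 0 < INR K2.
Proof. pose proof (exp_pos steep). lra. Qed.

Lemma index2_encoding_close x y r : in_cube d a b x -> in_cube d a b y -> (r < 2)%nat ->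
  index2 x r = index2 y r -> Rabs (encoding x - encoding y) < / INR K2.
Proof.
  clear HK. intros Hx Hy Hr E. pose proof K2_pos. pose proof (lt_0_INR (S d) ltac:(lia)).
  assert (HK2n : (0 < K2)%nat) by (apply INR_lt; simpl; lra).
  assert (HK2' : (0 < value_res d K2)%nat) by (unfold value_res; nia).
  pose proof (cell_index_close 1 2 (value_res d K2) ltac:(lia) _ _ r HK2' (value_coord_in d K a b Pm wm Hd Hab x Hx)
    (value_coord_in d K a b Pm wm Hd Hab y Hy) Hr E 0%nat ltac:(lia)) as Hc.
  rewrite !value_coord_eq in Hc by exact Hd. unfold value_res in Hc. rewrite mult_INR in Hc.
  unfold encoding. replace (stage1_value d (stage1 d K a b Pm wm x) / INR (S d)
    - stage1_value d (stage1 d K a b Pm wm y) / INR (S d))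
    with ((stage1_value d (stage1 d K a b Pm wm x) - stage1_value d (stage1 d K a b Pm wm y)) / INR (S d))
    in Hc by (field; lra).
  unfold Rdiv in Hc. rewrite Rabs_mult, (Rabs_right (/ INR (S d))) in Hc by (left; apply Rinv_0_lt_compat; lra).
  rewrite Rinv_mult in Hc. apply Rmult_lt_reg_r with (/ INR (S d)); [apply Rinv_0_lt_compat; lra|]. lra.
Qed.

Lemma index2_target_close x y r : in_cube d a b x -> in_cube d a b y -> (r < 2)%nat ->
  index2 x r = index2 y r -> Rabs (F x - F y) < 3 * e.
Proof.
  clear HK.
  intros Hx Hy Hr E. pose proof (index2_encoding_close x y r Hx Hy Hr E) as Hc.
  pose proof K2_pos. pose proof steep_pos.
  assert (Hh : 0 < / INR K2 <= exp (- steep)).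
  { split; [apply Rinv_0_lt_compat; lra|]. rewrite exp_Ropp. left.
    apply Rinv_lt_contravar; [apply Rmult_lt_0_compat; [apply exp_pos|lra]|exact HK2]. }
  assert (Hm : 1 <= INR (S d)) by (apply (le_INR 1); lia).
  apply Rabs_def2 in Hc. destruct (Henc x Hx), (Henc y Hy). unfold encoding in Hc.
  apply Rabs_def1.
  - apply (exp_code_separates steep e (INR (S d)) slack (F x) (F y)
      (encoding x) (encoding y) (/ INR K2)); auto; unfold encoding; lra.
  - apply Ropp_lt_cancel. rewrite Ropp_involutive, Ropp_minus_distr.
    apply (exp_code_separates steep e (INR (S d)) slack (F y) (F x)
      (encoding y) (encoding x) (/ INR K2)); auto; unfold encoding; lra.
Qed.

Lemma stage2_code_close P2 w2 (rep : nat -> nat -> nat -> R) :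
  (forall r, INR (S (value_res d K2) ^ 1) + 1 < P2 r /\ 0 <= w2 r /\
     forall k, (k < S (value_res d K2) ^ 1)%nat ->
     Rabs (sigma1 (w2 r / (P2 r - INR k)) - clip01 (F (rep r k))) < e) ->
  (forall x r, in_cube d a b x /\ 0 < gate2 x r ->
     (in_cube d a b (rep r (index2 x r)) /\ 0 < gate2 (rep r (index2 x r)) r) /\
     index2 (rep r (index2 x r)) r = index2 x r) ->
  forall x r, in_cube d a b x -> (r < 2)%nat -> 0 < gate2 x r ->
  Rabs (stage2 d K K2 a b Pm wm P2 w2 x (neuron 1 0 0 r) - F x) < 4 * e.
Proof.
  clear HK.
  intros Hlook Hrep x r Hx Hr HG.
  destruct (Hrep x r (conj Hx HG)) as [[Hy _] Hidx].
  set (y := rep r (index2 x r)) in *.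
  destruct (Hlook r) as [HP [Hw Hacc]].
  pose proof (value_coord_in d K a b Pm wm Hd Hab x Hx) as Hv.
  specialize (Hacc _ (cell_index_lt 1 2 (value_res d K2) ltac:(lia) _ r Hv Hr)). fold (index2 x r) y in Hacc.
  destruct (quantize_block_spec 1 2 (value_res d K2) ltac:(lia) (net_width d) ltac:(lia)
    (proj2 (net_width_ge d Hd)) (net_width d) (value_map d) value_shift P2 w2 (stage1 d K a b Pm wm x) r Hv Hr)
    as [_ Hcode].
  unfold stage2. rewrite (Hcode HG HP Hw). fold (value_coord d K a b Pm wm x) (index2 x r).
  rewrite clip01_id in Hacc by (apply HF; exact Hy).
  pose proof (index2_target_close y x r Hy Hx Hr Hidx).
  pose proof (Rabs_triang (sigma1 (w2 r / (P2 r - INR (index2 x r))) - F y) (F y - F x)) as Ht.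
  replace (sigma1 (w2 r / (P2 r - INR (index2 x r))) - F y + (F y - F x))
    with (sigma1 (w2 r / (P2 r - INR (index2 x r))) - F x) in Ht by ring.
  lra.
Qed.

Lemma stage2_accuracy : exists P2 w2 : nat -> R, forall x, in_cube d a b x ->
  Rabs (Rmax (stage2_out d K K2 a b Pm wm P2 w2 x 0) (stage2_out d K K2 a b Pm wm P2 w2 x 1) - F x) < 4 * e.
Proof.
  clear HK.
  destruct (choose_representatives (fun _ : nat => a) (fun x r => in_cube d a b x /\ 0 < gate2 x r) index2)
    as [rep Hrep].
  destruct (lookup_family (S (value_res d K2) ^ 1) (fun r k => clip01 (F (rep r k))) e) as [P2 [w2 Hlook]];
    [intros; apply clip01_range|exact He|].
  exists P2, w2. intros x Hx. pose proof (value_coord_in d K a b Pm wm Hd Hab x Hx) as Hv.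
  assert (Hgate : forall r, (r < 2)%nat -> stage2 d K K2 a b Pm wm P2 w2 x (neuron 1 1 0 r) = gate2 x r).
  { intros r Hr. exact (proj1 (quantize_block_spec 1 2 (value_res d K2) ltac:(lia) (net_width d) ltac:(lia)
      (proj2 (net_width_ge d Hd)) (net_width d) (value_map d) value_shift P2 w2 (stage1 d K a b Pm wm x) r Hv Hr)). }
  apply (max_gated_close (fun r => stage2 d K K2 a b Pm wm P2 w2 x (neuron 1 0 0 r))
                         (fun r => stage2 d K K2 a b Pm wm P2 w2 x (neuron 1 1 0 r))); [apply HF, Hx| | |].
  - intros r Hr. rewrite Hgate by exact Hr. split; [|apply clip01_range].
    unfold stage2, quantize_block, layer. apply Rabs_le_inv, Rabs_sigma_le.
  - intros r Hr HG. rewrite Hgate in HG by exact Hr.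
    exact (stage2_code_close P2 w2 rep Hlook Hrep x r Hx Hr HG).
  - destruct (gate_cover 1 2 (value_res d K2) ltac:(lia) (value_coord d K a b Pm wm x) ltac:(lia))
      as [r [Hr HG]].
    exists r. split; [exact Hr|]. rewrite Hgate by exact Hr. exact HG.
Qed.

End Approximation.

Lemma normalized_resolution d a b f Mf e : a < b -> cont_on_cube d a b f -> 0 < Mf -> 0 < e ->
  exists K, (0 < K)%nat /\ forall x y, in_cube d a b x -> in_cube d a b y ->
    (forall l, (l < d)%nat -> Rabs (cube_coords d a b x l - cube_coords d a b y l) < / INR K) ->
    Rabs ((f x + Mf) / (2 * Mf) - (f y + Mf) / (2 * Mf)) < e.
Proof.
  intros Hab Hf HMf He.
  destruct (uniform_continuity d a b f Hab Hf (2 * Mf * e) ltac:(nra)) as [du [Hdu Hu]].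
  destruct (INR_unbounded ((b - a) / du)) as [K HK].
  assert (HKR : 0 < INR K) by (pose proof (Rdiv_lt_0_compat (b - a) du ltac:(lra) Hdu); lra).
  exists K. split; [apply INR_lt; simpl; lra|]. intros x y Hx Hy Hxy.
  replace ((f x + Mf) / (2 * Mf) - (f y + Mf) / (2 * Mf)) with ((f x - f y) / (2 * Mf)) by (field; lra).
  unfold Rdiv. rewrite Rabs_mult, (Rabs_right (/ (2 * Mf))) by (left; apply Rinv_0_lt_compat; lra).
  apply Rmult_lt_reg_r with (2 * Mf); [lra|]. rewrite Rmult_assoc, Rinv_l, Rmult_1_r by lra.
  replace (e * (2 * Mf)) with (2 * Mf * e) by ring.
  apply Hu; [exact Hx|exact Hy|]. intros l Hl. specialize (Hxy l Hl).
  rewrite !(cube_coords_eq d a b Hab) in Hxy by exact Hl.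
  replace ((x l - a) / (b - a) - (y l - a) / (b - a)) with ((x l - y l) / (b - a)) in Hxy by (field; lra).
  unfold Rdiv in Hxy. rewrite Rabs_mult, (Rabs_right (/ (b - a))) in Hxy by (left; apply Rinv_0_lt_compat; lra).
  apply Rmult_lt_compat_r with (r := b - a) in Hxy; [|lra].
  rewrite Rmult_assoc, Rinv_l, Rmult_1_r in Hxy by lra.
  apply Rlt_le_trans with (/ INR K * (b - a)); [exact Hxy|].
  apply Rmult_le_reg_l with (INR K); [exact HKR|]. rewrite <- Rmult_assoc, Rinv_r, Rmult_1_l by lra.
  apply Rmult_le_reg_r with (/ du); [apply Rinv_0_lt_compat; lra|].
  rewrite Rmult_assoc, Rinv_r by lra. lra.
Qed.

Lemma normalized_range y M : 0 < M -> Rabs y <= M -> 0 <= (y + M) / (2 * M) <= 1.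
Proof.
  intros HM Hy. apply Rabs_le_inv in Hy. split.
  - apply Rmult_le_pos; [lra|left; apply Rinv_0_lt_compat; lra].
  - apply Rmult_le_reg_r with (2 * M); [lra|]. unfold Rdiv. rewrite Rmult_assoc, Rinv_l; lra.
Qed.

Lemma rescale_close y M r eps : 0 < M -> Rabs (r - (y + M) / (2 * M)) < 4 * (eps / (8 * M)) ->
  Rabs (- M + (M - - M) * r - y) < eps.
Proof.
  intros HM H.
  replace (- M + (M - - M) * r - y) with (2 * M * (r - (y + M) / (2 * M))) by (field; lra).
  rewrite Rabs_mult, (Rabs_right (2 * M)) by lra.
  replace eps with (2 * M * (4 * (eps / (8 * M)))) by (field; lra).
  apply Rmult_lt_compat_l; lra.
Qed.

Theorem theorem1 (d : nat) (a b : R) (f : (nat -> R) -> R) :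
  (0 < d)%nat -> a < b -> cont_on_cube d a b f ->
  forall eps, eps > 0 ->
  exists phi, in_H d (36 * d * (2 * d + 1)) 11 phi /\
    forall x, in_cube d a b x -> Rabs (phi x - f x) < eps.
Proof.
  intros Hd Hab Hf eps Heps.
  destruct (bounded_on_cube d a b f Hab Hf) as [Mf [HMf Hbound]].
  set (F := fun x => (f x + Mf) / (2 * Mf)). set (e := eps / (8 * Mf)).
  assert (He : 0 < e) by (apply Rdiv_lt_0_compat; lra).
  assert (HF : forall x, in_cube d a b x -> 0 <= F x <= 1)
    by (intros x Hx; apply normalized_range; [exact HMf|apply Hbound, Hx]).
  destruct (normalized_resolution d a b f Mf e Hab Hf HMf He) as [K [HK HFK]].
  destruct (stage1_encoding d a b F e K Hd Hab He HK HF HFK) as [Pm [wm Henc]].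
  destruct (INR_unbounded (exp (steep d e))) as [K2 HK2].
  destruct (stage2_accuracy d a b F e K Hd Hab He HF Pm wm K2 Henc HK2) as [P2 [w2 Hacc]].
  exists (approximant d K K2 a b (- Mf) Mf Pm wm P2 w2). split.
  - do 6 eexists. intros x. reflexivity.
  - intros x Hx. rewrite approximant_max by assumption.
    apply rescale_close; [exact HMf|exact (Hacc x Hx)].
Qed.
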